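(* In the network setting of the context, let $r$ be the running cost with $m\ge1$ and strictly positive vectors $\xi\in(0,\infty)^I$, $\zeta\in(0,\infty)^J$. Then there exist $\delta>0$ and $\tilde C>0$ such that Hypothesis A holds (with $d=I$) for the cost $r$, with $\mathcal K=\mathcal K_\delta:=\{x\in\mathbb R^I:|e\cdot x|>\delta|x|\}$ and $h(x,u)=\tilde C|x|^m$.
   Context: Network setting. $\mathcal I=\{1,\dots,I\}$, $\mathcal J=\{1,\dots,J\}$; $\mathcal G$ a bipartite tree on $\mathcal I\cup\mathcal J$ with edges $i\sim j$; $\mathcal J(i)=\{j:i\sim j\}$. Constants $\lambda_i>0$, $\gamma_i\ge0$, $\ell_i\in\mathbb R$; $\mu_{ij}>0$ if $i\sim j$, $\mu_{ij}=0$ otherwise. $e$ = all-ones vector, $a^\pm$ positive/negative parts. For $e\cdot\alpha=e\cdot\beta$, $G(\alpha,\beta)$ is the unique $\psi\in\mathbb R^{I\times J}$ with row sums $\alpha_i$, column sums $\beta_j$, and $\psi_{ij}=0$ for $i\not\sim j$. $\mathbb U=\{u=(u^c,u^s)\in\mathbb R^I_+\times\mathbb R^J_+:e\cdot u^c=e\cdot u^s=1\}$; $\hat G[u](x)=G(x-(e\cdot x)^+u^c,-(e\cdot x)^-u^s)$; drift $b_i(x,u)=-\sum_{j\in\mathcal J(i)}\mu_{ij}\hat G_{ij}[u](x)-\gamma_i(e\cdot x)^+u^c_i+\ell_i$. Controlled diffusion $dX_t=b(X_t,U_t)dt+\Sigma dW_t$ with $\Sigma=\operatorname{diag}(\sqrt{2\lambda_1},\dots,\sqrt{2\lambda_I})$;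 controlled generator $\mathcal L^u f(x)=\sum_i\lambda_i\partial_{ii}f(x)+b(x,u)\cdot\nabla f(x)$. Running cost: $r(x,u)=[(e\cdot x)^+]^m\sum_{i=1}^I\xi_i(u^c_i)^m+[(e\cdot x)^-]^m\sum_{j=1}^J\zeta_j(u^s_j)^m$. Hypothesis A (for a cost $r$, dimension $d$): there is an open $\mathcal K\subset\mathbb R^d$ such that (i) $\bar{\mathcal K}\cap\{x:\min_u r(x,u)\le c\}$ is compact for every $c\in\mathbb R$; (ii) there exist nonnegative functions $\mathcal V\in C^2(\mathbb R^d)$ and $h\in C(\mathbb R^d\times\mathbb U)$, both inf-compact (i.e. $\{x:\min_u h(x,u)\le c\}$ and $\{x:\mathcal V(x)\le c\}$ compact for all $c$), with $\mathcal L^u\mathcal V(x)\le1-h(x,u)$ for all $(x,u)\in\mathcal K^c\times\mathbb U$ and $\mathcal L^u\mathcal V(x)\le1+r(x,u)$ for all $(x,u)\in\mathcal K\times\mathbb U$. *)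

From Stdlib Require Import Reals Relations ClassicalEpsilon Arith.
Open Scope R_scope.

(* rsum n f = f 0 + ... + f (n-1)  (0 if n = 0). Indices are 0-based:
   {1,...,I} of the paper is {0,...,I-1} here. *)
Fixpoint rsum (n : nat) (f : nat -> R) : R :=
  match n with O => 0 | S k => rsum k f + f k end.

(* A point of R^d is a function nat -> R vanishing at indices >= d. *)
Definition inRd (d : nat) (x : nat -> R) : Prop := forall k, (d <= k)%nat -> x k = 0.

Definition edot (d : nat) (x : nat -> R) : R := rsum d x.
Definition norm (d : nat) (x : nat -> R) : R := sqrt (rsum d (fun i => x i * x i)).
Definition vsub (x y : nat -> R) : nat -> R := fun k => x k - y k.

Definition ppart (a : R) : R := Rmax a 0.
Definition npart (a : R) : R := Rmax (- a) 0.

(* real power a^m for a >= 0 and m > 0 (0^m = 0) *)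
Definition rpow (a m : R) : R := if Rle_dec a 0 then 0 else Rpower a m.

Definition is_open (d : nat) (K : (nat -> R) -> Prop) : Prop :=
  forall x, inRd d x -> K x -> exists eps, eps > 0 /\
    forall y, inRd d y -> norm d (vsub y x) < eps -> K y.

Definition closure (d : nat) (K : (nat -> R) -> Prop) : (nat -> R) -> Prop :=
  fun y => inRd d y /\ forall eps, eps > 0 -> exists x, inRd d x /\ K x /\ norm d (vsub x y) < eps.

(* compact subset of R^d  = closed and bounded (Heine-Borel) *)
Definition is_compact (d : nat) (S : (nat -> R) -> Prop) : Prop :=
  (exists M, forall x, inRd d x -> S x -> norm d x <= M) /\
  (forall (xs : nat -> nat -> R) y, (forall n, inRd d (xs n) /\ S (xs n)) -> inRd d y ->
     (forall eps, eps > 0 -> exists N, forall n, (n >= N)%nat -> norm d (vsub (xs n) y) < eps) ->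
     S y).

Definition continuous_on_Rd (d : nat) (f : (nat -> R) -> R) : Prop :=
  forall x, inRd d x -> forall eps, eps > 0 -> exists eta, eta > 0 /\
    forall y, inRd d y -> norm d (vsub y x) < eta -> Rabs (f y - f x) < eps.

Definition shift (x : nat -> R) (i : nat) (t : R) : nat -> R :=
  fun k => if Nat.eqb k i then x k + t else x k.

Definition has_partial (f : (nat -> R) -> R) (i : nat) (x : nat -> R) (l : R) : Prop :=
  derivable_pt_lim (fun t => f (shift x i t)) 0 l.

(* f is C^2 on R^d with first partials Df i and second partials D2f i j = d_j d_i f *)
Definition C2_with (d : nat) (f : (nat -> R) -> R)
    (Df : nat -> (nat -> R) -> R) (D2f : nat -> nat -> (nat -> R) -> R) : Prop :=
  continuous_on_Rd d f /\
  (forall i, (i < d)%nat -> continuous_on_Rd d (Df i)) /\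
  (forall i j, (i < d)%nat -> (j < d)%nat -> continuous_on_Rd d (D2f i j)) /\
  (forall x i, inRd d x -> (i < d)%nat -> has_partial f i x (Df i x)) /\
  (forall x i j, inRd d x -> (i < d)%nat -> (j < d)%nat -> has_partial (Df i) j x (D2f i j x)).

(* vertices: inl i (customer class i < I), inr j (server pool j < J);
   adj i j = true means i ~ j *)
Definition gvalid (I J : nat) (v : nat + nat) : Prop :=
  match v with inl i => (i < I)%nat | inr j => (j < J)%nat end.

Definition gedge (I J : nat) (adj : nat -> nat -> bool) (v w : nat + nat) : Prop :=
  match v, w with
  | inl i, inr j => (i < I)%nat /\ (j < J)%nat /\ adj i j = true
  | inr j, inl i => (i < I)%nat /\ (j < J)%nat /\ adj i j = true
  | _, _ => False
  end.

Definition gconnected (I J : nat) (adj : nat -> nat -> bool) : Prop :=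
  forall v w, gvalid I J v -> gvalid I J w -> clos_refl_trans _ (gedge I J adj) v w.

Definition is_tree (I J : nat) (adj : nat -> nat -> bool) : Prop :=
  gconnected I J adj /\
  forall i0 j0, (i0 < I)%nat -> (j0 < J)%nat -> adj i0 j0 = true ->
    ~ gconnected I J (fun i j => andb (adj i j) (negb (andb (Nat.eqb i i0) (Nat.eqb j j0)))).

Definition G_spec (I J : nat) (adj : nat -> nat -> bool) (alpha beta : nat -> R)
    (psi : nat -> nat -> R) : Prop :=
  (forall i, (i < I)%nat -> rsum J (psi i) = alpha i) /\
  (forall j, (j < J)%nat -> rsum I (fun i => psi i j) = beta j) /\
  (forall i j, (i < I)%nat -> (j < J)%nat -> adj i j = false -> psi i j = 0).

Lemma inhabited_mat : inhabited (nat -> nat -> R).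
Proof. exact (inhabits (fun _ _ => 0)). Qed.

(* G(alpha,beta): the (unique, when G is a tree and e.alpha = e.beta) psi with
   row sums alpha, column sums beta, supported on the edges *)
Definition Gmap (I J : nat) (adj : nat -> nat -> bool) (alpha beta : nat -> R) : nat -> nat -> R :=
  epsilon inhabited_mat (G_spec I J adj alpha beta).

Definition inU (I J : nat) (uc us : nat -> R) : Prop :=
  (forall i, (i < I)%nat -> 0 <= uc i) /\ (forall j, (j < J)%nat -> 0 <= us j) /\
  rsum I uc = 1 /\ rsum J us = 1.

Definition Ghat (I J : nat) (adj : nat -> nat -> bool) (uc us x : nat -> R) : nat -> nat -> R :=
  Gmap I J adj (fun i => x i - ppart (edot I x) * uc i) (fun j => - (npart (edot I x) * us j)).

Definition drift (I J : nat) (adj : nat -> nat -> bool) (gam ell : nat -> R) (mu : nat -> nat -> R)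
    (x uc us : nat -> R) (i : nat) : R :=
  - rsum J (fun j => if adj i j then mu i j * Ghat I J adj uc us x i j else 0)
  - gam i * ppart (edot I x) * uc i + ell i.

(* controlled generator L^u f(x), with f given by its partials Df, D2f *)
Definition gen (I J : nat) (adj : nat -> nat -> bool) (lam gam ell : nat -> R) (mu : nat -> nat -> R)
    (Df : nat -> (nat -> R) -> R) (D2f : nat -> nat -> (nat -> R) -> R)
    (x uc us : nat -> R) : R :=
  rsum I (fun i => lam i * D2f i i x) +
  rsum I (fun i => drift I J adj gam ell mu x uc us i * Df i x).

Definition rcost (I J : nat) (m : R) (xi zeta : nat -> R) (x uc us : nat -> R) : R :=
  rpow (ppart (edot I x)) m * rsum I (fun i => xi i * rpow (uc i) m) +
  rpow (npart (edot I x)) m * rsum J (fun j => zeta j * rpow (us j) m).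

Definition cost := (nat -> R) -> (nat -> R) -> (nat -> R) -> R.

Definition continuous_RdU (I J : nat) (c : cost) : Prop :=
  forall x uc us, inRd I x -> inU I J uc us -> forall eps, eps > 0 -> exists eta, eta > 0 /\
    forall y vc vs, inRd I y -> inU I J vc vs ->
      norm I (vsub y x) + rsum I (fun i => Rabs (vc i - uc i)) + rsum J (fun j => Rabs (vs j - us j)) < eta ->
      Rabs (c y vc vs - c x uc us) < eps.

(* { x : min_u c(x,u) <= lvl }  (the min over the compact U is attained) *)
Definition minU_le (I J : nat) (c : cost) (lvl : R) : (nat -> R) -> Prop :=
  fun x => inRd I x /\ exists uc us, inU I J uc us /\ c x uc us <= lvl.

Definition HypothesisA (I J : nat) (adj : nat -> nat -> bool) (lam gam ell : nat -> R)
    (mu : nat -> nat -> R) (r : cost) (K : (nat -> R) -> Prop) (h : cost) : Prop :=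
  is_open I K /\
  (forall lvl, is_compact I (fun x => closure I K x /\ minU_le I J r lvl x)) /\
  (forall x uc us, inRd I x -> inU I J uc us -> 0 <= h x uc us) /\
  continuous_RdU I J h /\
  (forall lvl, is_compact I (minU_le I J h lvl)) /\
  exists (V : (nat -> R) -> R) Dv D2v,
    C2_with I V Dv D2v /\
    (forall x, inRd I x -> 0 <= V x) /\
    (forall lvl, is_compact I (fun x => inRd I x /\ V x <= lvl)) /\
    (forall x uc us, inRd I x -> inU I J uc us -> ~ K x ->
        gen I J adj lam gam ell mu Dv D2v x uc us <= 1 - h x uc us) /\
    (forall x uc us, inRd I x -> inU I J uc us -> K x ->
        gen I J adj lam gam ell mu Dv D2v x uc us <= 1 + r x uc us).

Definition Kdelta (I : nat) (delta : R) : (nat -> R) -> Prop :=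
  fun x => inRd I x /\ Rabs (edot I x) > delta * norm I x.

From Stdlib Require Import Reals Lra Lia Psatz Arith Relations ClassicalEpsilon Classical FunctionalExtensionality.
Open Scope R_scope.

(* Root the tree at server pool 0.  On a tree the map G is explicit: the flow through an
   edge is the net mass of the subtree hanging below it.  Consequently, writing Y_v(x) for
   the sum of the x_k over the customer classes k below v, the drift of Y_v is
   -mu_(v,parent v) Y_v plus a combination of the Y_k with k strictly below v, up to an
   error of order |e.x| + 1.  Weighting Y_v^2 by lambda^depth(v) with lambda large makes
   this triangular system dissipative for the quadratic form Q(x) = sum_v w_v Y_v(x)^2,
   which is equivalent to |x|^2:  b.grad Q <= -c |x|^2 + C (|e.x| + 1) |x|.  For
   V = kappa (1 + Q)^(m/2) this gives L^u V <= 1 - C' |x|^m outside the cone K_delta,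
   where |e.x| <= delta |x|, while inside K_delta the growth of L^u V is of order
   |e.x|^m, which the running cost dominates because its minimum over U is a positive
   multiple of |e.x|^m when xi and zeta are positive. *)

Lemma rsum_ext n f g : (forall k, (k < n)%nat -> f k = g k) -> rsum n f = rsum n g.
Proof. induction n; simpl; intros H; auto. rewrite IHn by (intros; apply H; lia). rewrite H by lia. auto. Qed.

Lemma rsum_plus n f g : rsum n (fun k => f k + g k) = rsum n f + rsum n g.
Proof. induction n; simpl; [lra|rewrite IHn; lra]. Qed.
Lemma rsum_minus n f g : rsum n (fun k => f k - g k) = rsum n f - rsum n g.
Proof. induction n; simpl; [lra|rewrite IHn; lra]. Qed.
Lemma rsum_scal n c f : rsum n (fun k => c * f k) = c * rsum n f.
Proof. induction n; simpl; [lra|rewrite IHn; lra]. Qed.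
Lemma rsum_scalr n c f : rsum n (fun k => f k * c) = rsum n f * c.
Proof. induction n; simpl; [lra|rewrite IHn; lra]. Qed.
Lemma rsum_opp n f : rsum n (fun k => - f k) = - rsum n f.
Proof. induction n; simpl; [lra|rewrite IHn; lra]. Qed.
Lemma rsum_0 n : rsum n (fun _ => 0) = 0.
Proof. induction n; simpl; [lra|rewrite IHn; lra]. Qed.
Lemma rsum_const n c : rsum n (fun _ => c) = INR n * c.
Proof. induction n; simpl rsum; [simpl; lra|rewrite IHn, S_INR; lra]. Qed.
Lemma rsum_le n f g : (forall k, (k < n)%nat -> f k <= g k) -> rsum n f <= rsum n g.
Proof. induction n; simpl; intros H; [lra|].
  assert (rsum n f <= rsum n g) by (apply IHn; intros; apply H; lia).
  specialize (H n ltac:(lia)). lra. Qed.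
Lemma rsum_nonneg n f : (forall k, (k < n)%nat -> 0 <= f k) -> 0 <= rsum n f.
Proof. intros H. rewrite <- (rsum_0 n). apply rsum_le. auto. Qed.
Lemma rsum_abs n f : Rabs (rsum n f) <= rsum n (fun k => Rabs (f k)).
Proof. induction n; simpl. rewrite Rabs_R0; lra.
  eapply Rle_trans; [apply Rabs_triang|lra]. Qed.
Lemma rsum_swap n m (f : nat -> nat -> R) :
  rsum n (fun i => rsum m (fun j => f i j)) = rsum m (fun j => rsum n (fun i => f i j)).
Proof. induction n; simpl. rewrite rsum_0; auto. rewrite IHn, <- rsum_plus. auto. Qed.
Lemma rsum_single n f k0 : (k0 < n)%nat -> (forall k, (k < n)%nat -> k <> k0 -> f k = 0) -> rsum n f = f k0.
Proof. induction n; intros Hk H; [lia|simpl].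
  destruct (Nat.eq_dec k0 n).
  - subst. rewrite (rsum_ext n f (fun _ => 0)), rsum_0. lra. intros; apply H; lia.
  - rewrite IHn; [|lia|intros; apply H; lia]. rewrite (H n) by lia. lra. Qed.
Lemma rsum_zero n f : (forall k, (k < n)%nat -> f k = 0) -> rsum n f = 0.
Proof. intros H. rewrite (rsum_ext n f (fun _ => 0)) by auto. apply rsum_0. Qed.
Lemma rsum_term_le n f k0 : (k0 < n)%nat -> (forall k, (k < n)%nat -> 0 <= f k) -> f k0 <= rsum n f.
Proof. induction n; intros Hk H; [lia|simpl].
  destruct (Nat.eq_dec k0 n).
  - subst. assert (0 <= rsum n f) by (apply rsum_nonneg; intros; apply H; lia). lra.
  - assert (f k0 <= rsum n f) by (apply IHn; auto; lia). specialize (H n ltac:(lia)). lra. Qed.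

Lemma sqr_rsum_le n f : (rsum n f)^2 <= INR n * rsum n (fun k => f k ^ 2).
Proof. induction n; simpl rsum. simpl; lra.
  rewrite S_INR. set (Sm := rsum n f) in *. set (Q := rsum n (fun k => f k ^ 2)) in *.
  set (a := f n).
  destruct n. { unfold Sm, Q, a. simpl. nra. }
  assert (Hn : 0 < INR (S n)) by (apply lt_0_INR; lia).
  assert (INR (S n) * (2 * Sm * a) <= Sm ^ 2 + INR (S n) ^ 2 * a ^ 2) by (pose proof (pow2_ge_0 (Sm - INR (S n) * a)); nra).
  assert (2 * Sm * a <= Q + INR (S n) * a ^2).
  { apply Rmult_le_reg_l with (INR (S n)); auto. nra. }
  change (rsum (S n) (fun k : nat => f k * (f k * 1))) with Q. nra. Qed.

Definition chi (P : Prop) : R := if excluded_middle_informative P then 1 else 0.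
Lemma chi_true (P : Prop) : P -> chi P = 1.
Proof. unfold chi; destruct excluded_middle_informative; tauto. Qed.
Lemma chi_false (P : Prop) : ~ P -> chi P = 0.
Proof. unfold chi; destruct excluded_middle_informative; tauto. Qed.
Lemma chi_bounds P : 0 <= chi P <= 1.
Proof. unfold chi; destruct excluded_middle_informative; lra. Qed.

Definition sqnorm (d : nat) (x : nat -> R) := rsum d (fun i => x i * x i).
Lemma sqnorm_nonneg d x : 0 <= sqnorm d x.
Proof. apply rsum_nonneg; intros; nra. Qed.
Lemma norm_nonneg d x : 0 <= norm d x.
Proof. apply sqrt_pos. Qed.
Lemma norm_mul_self d x : norm d x * norm d x = sqnorm d x.
Proof. apply sqrt_sqrt, sqnorm_nonneg. Qed.
Lemma coord_sqr_le_sqnorm d x k : (k < d)%nat -> x k * x k <= sqnorm d x.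
Proof. intros. apply (rsum_term_le d (fun i => x i * x i)); auto. intros; nra. Qed.
Lemma Rabs_coord_le_norm d x k : (k < d)%nat -> Rabs (x k) <= norm d x.
Proof. intros Hk. pose proof (coord_sqr_le_sqnorm d x k Hk). pose proof (norm_mul_self d x).
  pose proof (norm_nonneg d x). pose proof (Rabs_pos (x k)).
  assert (Rabs (x k) * Rabs (x k) = x k * x k) by (rewrite <- Rabs_mult; apply Rabs_pos_eq; nra).
  nra. Qed.
Lemma rsum_Rabs_le_norm d x : rsum d (fun k => Rabs (x k)) <= INR d * norm d x.
Proof. rewrite <- rsum_const. apply rsum_le. intros; apply Rabs_coord_le_norm; auto. Qed.
Lemma Rabs_edot_le d x : Rabs (edot d x) <= INR d * norm d x.
Proof. eapply Rle_trans; [apply rsum_abs|apply rsum_Rabs_le_norm]. Qed.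
Lemma sqnorm_lincomb d x y t : rsum d (fun k => (t * x k - y k) * (t * x k - y k)) =
  t * t * sqnorm d x - 2 * t * rsum d (fun k => x k * y k) + sqnorm d y.
Proof. unfold sqnorm. induction d; simpl. lra. rewrite IHd. lra. Qed.
Lemma sqnorm_eq0 d x : sqnorm d x = 0 -> forall k, (k < d)%nat -> x k = 0.
Proof. intros H k Hk. pose proof (coord_sqr_le_sqnorm d x k Hk). nra. Qed.
Lemma dot_le_norm_mul d x y : rsum d (fun k => x k * y k) <= norm d x * norm d y.
Proof.
  set (a := norm d x). set (b := norm d y).
  assert (Ha : 0 <= a) by apply norm_nonneg. assert (Hb : 0 <= b) by apply norm_nonneg.
  assert (HA : a * a = sqnorm d x) by apply norm_mul_self. assert (HB : b * b = sqnorm d y) by apply norm_mul_self.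
  destruct (Req_dec a 0) as [Ha0|Ha0].
  { rewrite rsum_zero. nra. intros k Hk. rewrite (sqnorm_eq0 d x) by (auto; nra). lra. }
  destruct (Req_dec b 0) as [Hb0|Hb0].
  { rewrite rsum_zero. nra. intros k Hk. rewrite (sqnorm_eq0 d y) by (auto; nra). lra. }
  pose proof (sqnorm_lincomb d x y (b / a)).
  assert (0 <= rsum d (fun k => (b / a * x k - y k) * (b / a * x k - y k))) by (apply rsum_nonneg; intros; apply Rle_0_sqr).
  assert (b / a * (b / a) * sqnorm d x = b * b) by (rewrite <- HA; field; auto).
  set (c := rsum d (fun k => x k * y k)) in *.
  assert (2 * (b / a) * c <= 2 * (b * b)) by nra.
  assert (2 * (b / a) * c * a = 2 * b * c) by (field; auto).
  assert (2 * b * c <= 2 * (b * b) * a) by (rewrite <- H3; apply Rmult_le_compat_r; lra).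
  assert (c <= b * a) by (apply Rmult_le_reg_l with (2 * b); nra). lra. Qed.
Lemma INR_pos n : (1 <= n)%nat -> 0 < INR n.
Proof. intros. apply lt_0_INR; lia. Qed.

Lemma norm_triang d x y : norm d (fun k => x k + y k) <= norm d x + norm d y.
Proof.
  assert (sqnorm d (fun k => x k + y k) = sqnorm d x + 2 * rsum d (fun k => x k * y k) + sqnorm d y).
  { unfold sqnorm. induction d; simpl. lra. rewrite IHd. lra. }
  pose proof (dot_le_norm_mul d x y).
  pose proof (norm_mul_self d (fun k => x k + y k)). pose proof (norm_mul_self d x). pose proof (norm_mul_self d y).
  pose proof (norm_nonneg d (fun k => x k + y k)). pose proof (norm_nonneg d x). pose proof (norm_nonneg d y).
  nra. Qed.

(** * Rooting the tree *)

Definition vertex := (nat + nat)%type.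
Definition vertex_eq_dec (v w : vertex) : {v = w} + {v <> w}.
Proof. decide equality; apply Nat.eq_dec. Defined.

Lemma ex_least (P : nat -> Prop) : (exists n, P n) -> exists n, P n /\ forall k, P k -> (n <= k)%nat.
Proof. intros [n Hn]. revert Hn. induction n as [n IH] using (well_founded_induction Wf_nat.lt_wf).
  intros Hn. destruct (classic (exists k, (k < n)%nat /\ P k)) as [[k [Hk Pk]]|H].
  - apply (IH k Hk Pk).
  - exists n. split; auto. intros k Pk. destruct (le_lt_dec n k); auto. exfalso; apply H; eauto. Qed.

Lemma clos_rt_sym {A} (R : A -> A -> Prop) : (forall x y, R x y -> R y x) ->
  forall x y, clos_refl_trans A R x y -> clos_refl_trans A R y x.
Proof. intros Hs x y H. induction H. apply rt_step; auto. apply rt_refl. eapply rt_trans; eauto. Qed.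

Section RootedTree.
Variables (I J : nat) (adj : nat -> nat -> bool).
Hypothesis HJ : (1 <= J)%nat.
Hypothesis Hconn : gconnected I J adj.

Definition root : vertex := inr 0%nat.
Definition valid (v : vertex) := gvalid I J v.
Definition edge (v w : vertex) := gedge I J adj v w.

Lemma edge_valid v w : edge v w -> valid v /\ valid w.
Proof. unfold edge, gedge, valid, gvalid; destruct v, w; tauto. Qed.
Lemma root_valid : valid root.
Proof. unfold valid, root, gvalid. lia. Qed.

Fixpoint path_to_root (n : nat) (v : vertex) : Prop :=
  match n with O => v = root | S n => exists w, edge v w /\ path_to_root n w end.

Lemma ex_path_to_root v : valid v -> exists n, path_to_root n v.
Proof. intros Hv. pose proof (Hconn v root Hv root_valid) as H.
  apply clos_rt_rt1n in H. remember root as r. clear Hv. induction H. subst. exists O; reflexivity.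
  destruct (IHclos_refl_trans_1n Heqr) as [n Hn]. exists (S n). simpl; eauto. Qed.

Definition depth (v : vertex) : nat :=
  epsilon (inhabits O) (fun n => path_to_root n v /\ forall k, path_to_root k v -> (n <= k)%nat).

Lemma depth_spec v : valid v -> path_to_root (depth v) v /\ forall k, path_to_root k v -> (depth v <= k)%nat.
Proof. intros Hv. unfold depth. apply (epsilon_spec (inhabits O) (fun n => path_to_root n v /\ forall k, path_to_root k v -> (n <= k)%nat)).
  apply ex_least, ex_path_to_root; auto. Qed.

Lemma depth_root : depth root = O.
Proof. pose proof (depth_spec root root_valid) as [_ H]. specialize (H O eq_refl). lia. Qed.
Lemma depth_eq0 v : valid v -> depth v = O -> v = root.
Proof. intros Hv H. pose proof (depth_spec v Hv) as [H1 _]. rewrite H in H1. exact H1. Qed.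

Lemma ex_parent v : valid v -> v <> root -> exists w, edge v w /\ S (depth w) = depth v.
Proof. intros Hv Hr. pose proof (depth_spec v Hv) as [H1 H2].
  destruct (depth v) as [|n] eqn:Hd. { exfalso; apply Hr; apply depth_eq0; auto. }
  destruct H1 as [w [Hw Hrw]]. exists w. split; auto.
  destruct (edge_valid _ _ Hw) as [_ Hwv]. pose proof (depth_spec w Hwv) as [H3 H4].
  specialize (H4 n Hrw). assert (path_to_root (S (depth w)) v) by (simpl; eauto).
  specialize (H2 _ H). lia. Qed.

Definition parent (v : vertex) : vertex :=
  epsilon (inhabits root) (fun w => (v = root /\ w = root) \/ (v <> root /\ edge v w /\ S (depth w) = depth v)).

Lemma parent_root : parent root = root.
Proof. unfold parent.
  pose proof (epsilon_spec (inhabits root) (fun w => (root = root /\ w = root) \/ (root <> root /\ edge root w /\ S (depth w) = depth root))) as H.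
  destruct H as [[_ H]|[H _]]; auto. exists root; auto. congruence. Qed.

Lemma parent_spec v : valid v -> v <> root -> edge v (parent v) /\ S (depth (parent v)) = depth v.
Proof. intros Hv Hr. unfold parent.
  pose proof (epsilon_spec (inhabits root) (fun w => (v = root /\ w = root) \/ (v <> root /\ edge v w /\ S (depth w) = depth v))) as H.
  destruct H as [[H _]|[_ H]]; try congruence; auto.
  destruct (ex_parent v Hv Hr) as [w Hw]. exists w. right. auto. Qed.

Lemma parent_valid v : valid v -> valid (parent v).
Proof. intros Hv. destruct (vertex_eq_dec v root). subst; rewrite parent_root; apply root_valid.
  apply (edge_valid v); apply parent_spec; auto. Qed.

Lemma depth_parent_le v : valid v -> (depth (parent v) <= depth v)%nat.
Proof. intros Hv. destruct (vertex_eq_dec v root). subst; rewrite parent_root; lia.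
  pose proof (parent_spec v Hv n). lia. Qed.

Definition parent_iter (n : nat) (v : vertex) := Nat.iter n parent v.

Lemma parent_iter_valid n v : valid v -> valid (parent_iter n v).
Proof. induction n; simpl; auto. intros; apply parent_valid; auto. Qed.
Lemma parent_iterS n v : parent_iter (S n) v = parent_iter n (parent v).
Proof. unfold parent_iter. rewrite <- Nat.iter_succ_r. reflexivity. Qed.
Lemma depth_parent_iter_le n v : valid v -> (depth (parent_iter n v) <= depth v)%nat.
Proof. intros Hv. induction n; simpl. lia. eapply Nat.le_trans; [apply depth_parent_le, parent_iter_valid; auto|auto]. Qed.
Lemma depth_parent_iterS_lt n v : valid v -> v <> root -> (depth (parent_iter (S n) v) < depth v)%nat.
Proof. intros Hv Hr. rewrite parent_iterS. pose proof (depth_parent_iter_le n (parent v) (parent_valid v Hv)).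
  pose proof (parent_spec v Hv Hr). lia. Qed.
Lemma parent_iter_add a b v : parent_iter (a + b) v = parent_iter a (parent_iter b v).
Proof. unfold parent_iter. apply Nat.iter_add. Qed.

Definition below (k v : vertex) := exists n, parent_iter n k = v.

Lemma below_refl v : below v v.
Proof. exists O; reflexivity. Qed.
Lemma below_trans a b c : below a b -> below b c -> below a c.
Proof. intros [n Hn] [m Hm]. exists (m + n)%nat. rewrite parent_iter_add, Hn; auto. Qed.
Lemma depth_below_le k v : valid k -> below k v -> (depth v <= depth k)%nat.
Proof. intros Hk [n Hn]. subst. apply depth_parent_iter_le; auto. Qed.
Lemma below_parent k : below k (parent k).
Proof. exists 1%nat; reflexivity. Qed.

Lemma below_parent_iff k v : k <> v -> (below k v <-> below (parent k) v).
Proof. intros Hkv. split.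
  - intros [n Hn]. destruct n. simpl in Hn; congruence. exists n. rewrite <- parent_iterS; auto.
  - intros [n Hn]. exists (S n). rewrite parent_iterS; auto. Qed.

Lemma chi_below_parent c v : c <> v -> chi (below c v) = chi (below (parent c) v).
Proof. intros Hne. destruct (classic (below c v)) as [Hd|Hd].
  - rewrite (chi_true _ Hd), chi_true; [reflexivity|apply (below_parent_iff c v Hne); auto].
  - rewrite (chi_false _ Hd), chi_false; [reflexivity|rewrite <- (below_parent_iff c v Hne); auto]. Qed.

Lemma parent_not_below k : valid k -> k <> root -> ~ below (parent k) k.
Proof. intros Hk Hr [n Hn]. pose proof (depth_parent_iterS_lt n k Hk Hr). rewrite parent_iterS, Hn in H. lia. Qed.

Lemma below_antisym a b : valid a -> below a b -> below b a -> a = b.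
Proof. intros Ha [n Hn] [m Hm]. destruct n. exact Hn.
  destruct (vertex_eq_dec a root) as [e|n0]. { rewrite e in *. assert (parent_iter (S n) root = root).
    { clear Hn Hm. induction n. simpl; apply parent_root. rewrite parent_iterS, parent_root; auto. }
    congruence. }
  pose proof (depth_parent_iterS_lt n a Ha n0). rewrite Hn in H.
  assert (valid b) by (rewrite <- Hn; apply parent_iter_valid; auto).
  pose proof (depth_parent_iter_le m b H0). rewrite Hm in H1. lia. Qed.

Lemma below_total k a b : below k a -> below k b -> below a b \/ below b a.
Proof. intros [n Hn] [m Hm]. destruct (le_lt_dec n m).
  - left. exists (m - n)%nat. rewrite <- Hn, <- parent_iter_add. replace (m - n + n)%nat with m by lia. auto.
  - right. exists (n - m)%nat. rewrite <- Hm, <- parent_iter_add. replace (n - m + m)%nat with n by lia. auto. Qed.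

Lemma child_below_unique k c c' : valid c -> valid c' -> c <> root -> c' <> root -> parent c = parent c' ->
  below k c -> below k c' -> c = c'.
Proof. intros Hc Hc' Hr Hr' Hp H1 H2.
  assert (depth c = depth c') by (pose proof (parent_spec c Hc Hr); pose proof (parent_spec c' Hc' Hr'); rewrite Hp in *; lia).
  destruct (below_total k c c' H1 H2) as [[n Hn]|[n Hn]].
  - destruct n. auto. pose proof (depth_parent_iterS_lt n c Hc Hr). rewrite Hn in H0. lia.
  - destruct n. auto. pose proof (depth_parent_iterS_lt n c' Hc' Hr'). rewrite Hn in H0. lia. Qed.

Lemma below_root v : valid v -> below v root.
Proof. intros Hv. exists (depth v). remember (depth v) as n. revert v Hv Heqn.
  induction n; intros v Hv Hd. simpl. apply depth_eq0; auto.
  rewrite parent_iterS. destruct (vertex_eq_dec v root). subst. rewrite parent_root.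
  rewrite depth_root in Hd. lia.
  apply IHn. apply parent_valid; auto. pose proof (parent_spec v Hv n0). lia. Qed.

Lemma below_child w v : valid w -> w <> v -> below w v -> exists c, parent c = v /\ c <> v /\ below w c /\ valid c.
Proof. intros Hw Hne Hd.
  destruct (ex_least (fun n => parent_iter n w = v) Hd) as [n [Hn Hmin]].
  destruct n. simpl in Hn; congruence.
  exists (parent_iter n w). repeat split.
  - exact Hn.
  - intros H. specialize (Hmin n H). lia.
  - exists n; auto.
  - apply parent_iter_valid; auto. Qed.

End RootedTree.

(** * The map G on a tree *)

Section TreeFlow.
Variables (I J : nat) (adj : nat -> nat -> bool).
Hypothesis HJ : (1 <= J)%nat.
Hypothesis Htree : is_tree I J adj.

Let Hconn : gconnected I J adj := proj1 Htree.

Notation valid := (valid I J).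
Notation edge := (edge I J adj).
Notation parent := (parent I J adj).
Notation below := (below I J adj).

Lemma edge_customer i w : edge (inl i) w -> exists j, w = inr j /\ (i < I)%nat /\ (j < J)%nat /\ adj i j = true.
Proof. unfold edge, gedge. destruct w; [tauto|]. intros; eauto. Qed.
Lemma edge_server j w : edge (inr j) w -> exists i, w = inl i /\ (i < I)%nat /\ (j < J)%nat /\ adj i j = true.
Proof. unfold edge, gedge. destruct w; [|tauto]. intros; eauto. Qed.

Lemma valid_customer i : (i < I)%nat -> valid (inl i).
Proof. unfold valid; simpl; auto. Qed.
Lemma valid_server j : (j < J)%nat -> valid (inr j).
Proof. unfold valid; simpl; auto. Qed.

Lemma parent_customer i : (i < I)%nat -> exists j, parent (inl i) = inr j /\ (j < J)%nat /\ adj i j = true.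
Proof. intros Hi. destruct (parent_spec I J adj HJ Hconn (inl i) (valid_customer i Hi)) as [H _]. discriminate.
  apply edge_customer in H. destruct H as [j [H1 [_ [H2 H3]]]]. eauto. Qed.
Lemma parent_server j : (j < J)%nat -> j <> 0%nat -> exists i, parent (inr j) = inl i /\ (i < I)%nat /\ adj i j = true.
Proof. intros Hj Hj0. destruct (parent_spec I J adj HJ Hconn (inr j) (valid_server j Hj)) as [H _].
  unfold root; congruence.
  apply edge_server in H. destruct H as [i [H1 [H2 [_ H3]]]]. eauto. Qed.

Lemma parent_asym i j : (i < I)%nat -> parent (inl i) = inr j -> parent (inr j) <> inl i.
Proof. intros Hi H1 H2. apply (parent_not_below I J adj HJ Hconn (inl i) (valid_customer i Hi)). discriminate.
  rewrite H1. exists 1%nat. simpl. rewrite H2. reflexivity. Qed.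

Lemma tree_edge_parent i j : (i < I)%nat -> (j < J)%nat -> adj i j = true ->
  parent (inl i) = inr j \/ parent (inr j) = inl i.
Proof. intros Hi Hj Ha. apply NNPP. intros Hn. apply not_or_and in Hn. destruct Hn as [N1 N2].
  apply (proj2 Htree i j Hi Hj Ha).
  set (adj' := fun i1 j1 => andb (adj i1 j1) (negb (andb (Nat.eqb i1 i) (Nat.eqb j1 j)))).
  assert (Hr : forall n v, valid v -> (depth I J adj v <= n)%nat -> clos_refl_trans _ (gedge I J adj') v root).
  { induction n; intros v Hv Hd.
    - assert (v = root) by (apply (depth_eq0 I J adj HJ Hconn); auto; lia). subst; apply rt_refl.
    - destruct (vertex_eq_dec v root). subst; apply rt_refl.
      destruct (parent_spec I J adj HJ Hconn v Hv n0) as [HE HD].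
      eapply rt_trans; [apply rt_step|apply IHn; [apply (parent_valid I J adj HJ Hconn v Hv)|lia]].
      destruct v as [i1|j1].
      + apply edge_customer in HE. destruct HE as [j1 [He [Hi1 [Hj1 Ha1]]]]. rewrite He.
        simpl. repeat split; auto. unfold adj'. rewrite Ha1. simpl.
        destruct (Nat.eqb_spec i1 i); destruct (Nat.eqb_spec j1 j); simpl; auto. subst. congruence.
      + apply edge_server in HE. destruct HE as [i1 [He [Hi1 [Hj1 Ha1]]]]. rewrite He.
        simpl. repeat split; auto. unfold adj'. rewrite Ha1. simpl.
        destruct (Nat.eqb_spec i1 i); destruct (Nat.eqb_spec j1 j); simpl; auto. subst. congruence. }
  intros v w Hv Hw. eapply rt_trans. apply (Hr _ v Hv (le_n _)).
  apply clos_rt_sym. { intros x y; destruct x, y; simpl; tauto. } apply (Hr _ w Hw (le_n _)). Qed.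

Lemma chi_below_children (v w : vertex) (f : nat -> vertex) (n : nat) :
  valid v -> valid w ->
  (forall t, f t <> v) ->
  (forall t t', (t < n)%nat -> (t' < n)%nat -> f t = f t' -> t = t') ->
  (forall t, (t < n)%nat -> valid (f t)) ->
  (forall c, valid c -> parent c = v -> c <> v -> exists t, (t < n)%nat /\ c = f t) ->
  chi (below w v) = chi (w = v) + rsum n (fun t => chi (parent (f t) = v) * chi (below w (f t))).
Proof. intros Hv Hw Hfv Hinj Hfval Hsurj.
  destruct (vertex_eq_dec w v) as [e|ne].
  - subst w. rewrite chi_true by apply below_refl. rewrite chi_true by auto. rewrite rsum_zero. lra.
    intros t Ht. destruct (classic (parent (f t) = v)) as [Hp|Hp].
    + rewrite (chi_false (below v (f t))). lra. intros Hd.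
      apply (Hfv t). symmetry. apply (below_antisym I J adj HJ Hconn); auto. rewrite <- Hp. apply below_parent.
    + rewrite chi_false by auto. lra.
  - rewrite (chi_false (w = v)) by auto.
    destruct (classic (below w v)) as [Hd|Hd].
    + rewrite chi_true by auto. destruct (below_child I J adj HJ Hconn w v Hw ne Hd) as [c [Hc1 [Hc2 [Hc3 Hc4]]]].
      destruct (Hsurj c Hc4 Hc1 Hc2) as [t0 [Ht0 Hct]]. subst c.
      rewrite (rsum_single n _ t0 Ht0). rewrite !chi_true; auto. lra.
      intros t Ht Hne. destruct (classic (parent (f t) = v /\ below w (f t))) as [[H1 H2]|H1].
      * exfalso. apply Hne. apply Hinj; auto.
        apply (child_below_unique I J adj HJ Hconn w); auto.
        { intros e. apply (Hfv t). rewrite <- H1, e. symmetry; apply parent_root. }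
        { intros e. apply (Hfv t0). rewrite <- Hc1, e. symmetry; apply parent_root. }
        congruence.
      * apply not_and_or in H1. destruct H1; [rewrite (chi_false (parent (f t) = v))|rewrite (chi_false (below w (f t)))]; auto; lra.
    + rewrite chi_false by auto. rewrite rsum_zero. lra. intros t Ht.
      destruct (classic (parent (f t) = v /\ below w (f t))) as [[H1 H2]|H1].
      * exfalso. apply Hd. eapply below_trans; eauto. rewrite <- H1. apply below_parent.
      * apply not_and_or in H1. destruct H1; [rewrite (chi_false (parent (f t) = v))|rewrite (chi_false (below w (f t)))]; auto; lra.
Qed.

Lemma chi_below_customer i w : (i < I)%nat -> valid w ->
  chi (below w (inl i)) = chi (w = inl i) + rsum J (fun j => chi (parent (inr j) = inl i) * chi (below w (inr j))).
Proof. intros Hi Hw. apply (chi_below_children (inl i) w inr J); auto.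
  all: try (intros t H; discriminate); try (intros t t' _ _ H; congruence).
  intros c Hc Hp Hne. destruct c as [k|j].
  - destruct (parent_customer k Hc) as [j [Hj _]]. congruence.
  - exists j. split; auto. Qed.

Lemma chi_below_server j w : (j < J)%nat -> valid w ->
  chi (below w (inr j)) = chi (w = inr j) + rsum I (fun k => chi (parent (inl k) = inr j) * chi (below w (inl k))).
Proof. intros Hj Hw. apply (chi_below_children (inr j) w inl I); auto.
  all: try (intros t H; discriminate); try (intros t t' _ _ H; congruence).
  intros c Hc Hp Hne. destruct c as [k|j'].
  - exists k. split; auto.
  - destruct (Nat.eq_dec j' 0). subst. unfold root in Hp.
    change (inr 0%nat) with root in Hp. rewrite (parent_root I J adj) in Hp. unfold root in Hp. congruence.
    destruct (parent_server j' Hc n) as [i [Hi _]]. congruence. Qed.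

Definition mass (alpha beta : nat -> R) (g : vertex -> R) : R :=
  rsum I (fun k => g (inl k) * alpha k) - rsum J (fun j => g (inr j) * beta j).

Lemma mass_ext a b g1 g2 : (forall w, valid w -> g1 w = g2 w) -> mass a b g1 = mass a b g2.
Proof. intros H. unfold mass. rewrite (rsum_ext I (fun k => g1 (inl k) * a k) (fun k => g2 (inl k) * a k)).
  rewrite (rsum_ext J (fun j => g1 (inr j) * b j) (fun j => g2 (inr j) * b j)). auto.
  intros; rewrite H; auto; apply valid_server; auto. intros; rewrite H; auto; apply valid_customer; auto. Qed.
Lemma mass_plus a b g1 g2 : mass a b (fun w => g1 w + g2 w) = mass a b g1 + mass a b g2.
Proof. unfold mass.
  rewrite (rsum_ext I _ (fun k => g1 (inl k) * a k + g2 (inl k) * a k)) by (intros; ring).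
  rewrite (rsum_ext J _ (fun k => g1 (inr k) * b k + g2 (inr k) * b k)) by (intros; ring).
  rewrite !rsum_plus. ring. Qed.
Lemma mass_scal a b c g : mass a b (fun w => c * g w) = c * mass a b g.
Proof. unfold mass.
  rewrite (rsum_ext I _ (fun k => c * (g (inl k) * a k))) by (intros; ring).
  rewrite (rsum_ext J _ (fun k => c * (g (inr k) * b k))) by (intros; ring).
  rewrite !rsum_scal. ring. Qed.
Lemma mass_opp a b g : mass a b (fun w => - g w) = - mass a b g.
Proof. rewrite (mass_ext a b _ (fun w => -1 * g w)) by (intros; ring). rewrite mass_scal; ring. Qed.
Lemma mass_minus a b g1 g2 : mass a b (fun w => g1 w - g2 w) = mass a b g1 - mass a b g2.
Proof. unfold Rminus. rewrite mass_plus, mass_opp. auto. Qed.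
Lemma mass_rsum a b n (c : nat -> R) (g : nat -> vertex -> R) :
  mass a b (fun w => rsum n (fun t => c t * g t w)) = rsum n (fun t => c t * mass a b (g t)).
Proof. induction n; simpl.
  - unfold mass. rewrite !rsum_zero; auto; intros; ring.
  - rewrite mass_plus, IHn, mass_scal. auto. Qed.
Lemma mass_customer a b i : (i < I)%nat -> mass a b (fun w => chi (w = inl i)) = a i.
Proof. intros Hi. unfold mass. rewrite (rsum_single I _ i Hi). rewrite rsum_zero. rewrite chi_true; auto; ring.
  intros; rewrite chi_false by discriminate; ring. intros k _ Hk. rewrite chi_false; [ring|congruence]. Qed.
Lemma mass_server a b j : (j < J)%nat -> mass a b (fun w => chi (w = inr j)) = - b j.
Proof. intros Hj. unfold mass. rewrite (rsum_single J _ j Hj). rewrite rsum_zero. rewrite chi_true; auto; ring.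
  intros; rewrite chi_false by discriminate; ring. intros k _ Hk. rewrite chi_false; [ring|congruence]. Qed.
Lemma mass_one a b : mass a b (fun _ => 1) = rsum I a - rsum J b.
Proof. unfold mass. rewrite (rsum_ext I _ a), (rsum_ext J _ b); auto; intros; ring. Qed.

Definition subtree_mass (a b : nat -> R) (v : vertex) : R := mass a b (fun w => chi (below w v)).

(* The flow through an edge is forced: it is the net mass of the subtree below the edge. *)
Definition tree_flow (a b : nat -> R) (i j : nat) : R :=
  chi (parent (inl i) = inr j) * subtree_mass a b (inl i) - chi (parent (inr j) = inl i) * subtree_mass a b (inr j).

Lemma subtree_mass_customer a b i : (i < I)%nat ->
  subtree_mass a b (inl i) - rsum J (fun j => chi (parent (inr j) = inl i) * subtree_mass a b (inr j)) = a i.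
Proof. intros Hi. unfold subtree_mass. rewrite <- mass_rsum, <- mass_minus.
  rewrite <- (mass_customer a b i Hi). apply mass_ext. intros w Hw. rewrite chi_below_customer; auto. ring. Qed.

Lemma subtree_mass_server a b j : (j < J)%nat ->
  rsum I (fun k => chi (parent (inl k) = inr j) * subtree_mass a b (inl k)) - subtree_mass a b (inr j) = b j.
Proof. intros Hj. unfold subtree_mass. rewrite <- mass_rsum, <- mass_minus.
  replace (b j) with (- - b j) by ring. rewrite <- (mass_server a b j Hj), <- mass_opp. apply mass_ext. intros w Hw. rewrite chi_below_server; auto. ring. Qed.

Lemma subtree_mass_root a b : rsum I a = rsum J b -> subtree_mass a b root = 0.
Proof. intros H. unfold subtree_mass. rewrite (mass_ext a b _ (fun _ => 1)). rewrite mass_one; lra.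
  intros w Hw. rewrite chi_true; auto. apply (below_root I J adj HJ Hconn); auto. Qed.

Lemma tree_flow_spec a b : rsum I a = rsum J b -> G_spec I J adj a b (tree_flow a b).
Proof. intros Hab. split; [|split].
  - intros i Hi. unfold tree_flow. rewrite rsum_minus, rsum_scalr.
    destruct (parent_customer i Hi) as [j0 [Hj0 [Hj0J _]]].
    rewrite (rsum_single J _ j0 Hj0J). rewrite chi_true by auto.
    rewrite <- (subtree_mass_customer a b i Hi). ring_simplify. auto.
    intros j Hj Hne. rewrite chi_false; auto. congruence.
  - intros j Hj. unfold tree_flow. rewrite rsum_minus.
    destruct (Nat.eq_dec j 0) as [e|ne].
    + subst j. rewrite (rsum_zero I (fun i => chi (parent (inr 0%nat) = inl i) * _)).
      2:{ intros i Hi. rewrite chi_false. ring. change (inr 0%nat) with root. rewrite parent_root. discriminate. }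
      pose proof (subtree_mass_server a b 0%nat Hj). pose proof (subtree_mass_root a b Hab). unfold root in H0. lra.
    + destruct (parent_server j Hj ne) as [i0 [Hi0 [Hi0I _]]].
      rewrite (rsum_single I (fun i => chi (parent (inr j) = inl i) * _) i0 Hi0I). rewrite chi_true by auto.
      rewrite <- (subtree_mass_server a b j Hj). ring.
      intros i Hi Hne. rewrite chi_false. ring. congruence.
  - intros i j Hi Hj Ha. unfold tree_flow. rewrite !chi_false. ring.
    + intros H. destruct (parent_server j Hj) as [i' [H1 [_ H2]]]. intros e; subst j.
      change (inr 0%nat) with root in H. rewrite parent_root in H. discriminate.
      rewrite H in H1. inversion H1. subst. congruence.
    + intros H. destruct (parent_customer i Hi) as [j' [H1 [_ H2]]]. rewrite H in H1. inversion H1. subst. congruence.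
Qed.

Lemma Gmap_spec a b : rsum I a = rsum J b -> G_spec I J adj a b (Gmap I J adj a b).
Proof. intros H. unfold Gmap. apply epsilon_spec. exists (tree_flow a b). apply tree_flow_spec; auto. Qed.

Section FlowUniqueness.
Variables (a b : nat -> R) (psi : nat -> nat -> R).
Hypothesis Hpsi : G_spec I J adj a b psi.

Lemma subtree_mass_edges v : subtree_mass a b v = rsum I (fun k => rsum J (fun j =>
   psi k j * (chi (below (inl k) v) - chi (below (inr j) v)))).
Proof. destruct Hpsi as [H1 [H2 H3]]. unfold subtree_mass, mass.
  rewrite (rsum_ext I (fun k => chi (below (inl k) v) * a k) (fun k => rsum J (fun j => chi (below (inl k) v) * psi k j))).
  2:{ intros k Hk. rewrite <- H1 by auto. rewrite <- rsum_scal. auto. }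
  rewrite (rsum_ext J (fun j => chi (below (inr j) v) * b j) (fun j => rsum I (fun k => chi (below (inr j) v) * psi k j))).
  2:{ intros j Hj. rewrite <- H2 by auto. rewrite <- rsum_scal. auto. }
  rewrite <- (rsum_swap I J (fun k j => chi (below (inr j) v) * psi k j)).
  rewrite <- rsum_minus. apply rsum_ext. intros k Hk. rewrite <- rsum_minus. apply rsum_ext. intros j Hj. ring. Qed.

Lemma edge_term_local k j v : (k < I)%nat -> (j < J)%nat ->
  psi k j * (chi (below (inl k) v) - chi (below (inr j) v)) =
  psi k j * (chi (parent (inl k) = inr j) * chi (inl k = v) - chi (parent (inr j) = inl k) * chi (inr j = v)).
Proof. intros Hk Hj. destruct Hpsi as [_ [_ H3]].
  destruct (adj k j) eqn:Ha.
  2:{ rewrite H3 by auto. ring. }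
  destruct (tree_edge_parent k j Hk Hj Ha) as [Hp|Hp].
  - rewrite (chi_false (parent (inr j) = inl k)) by (apply parent_asym; auto). rewrite (chi_true (parent (inl k) = inr j)) by auto.
    destruct (vertex_eq_dec (inl k) v) as [e|ne].
    + subst v. rewrite (chi_true (below (inl k) (inl k))) by apply below_refl. rewrite (chi_true (inl k = inl k)) by auto.
      rewrite chi_false. ring. rewrite <- Hp. apply (parent_not_below I J adj HJ Hconn). apply valid_customer; auto. discriminate.
    + rewrite (chi_false (inl k = v)) by auto.
      assert (below (inl k) v <-> below (inr j) v) by (rewrite <- Hp; apply below_parent_iff; auto).
      destruct (classic (below (inl k) v)). rewrite !chi_true by tauto. ring. rewrite !chi_false by tauto. ring.
  - rewrite (chi_false (parent (inl k) = inr j)) by (intros H; apply (parent_asym k j Hk H); auto). rewrite (chi_true (parent (inr j) = inl k)) by auto.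
    destruct (vertex_eq_dec (inr j) v) as [e|ne].
    + subst v. rewrite (chi_true (below (inr j) (inr j))) by apply below_refl. rewrite (chi_true (inr j = inr j)) by auto.
      rewrite chi_false. ring. rewrite <- Hp. apply (parent_not_below I J adj HJ Hconn). apply valid_server; auto.
      intros e. rewrite e in Hp. rewrite parent_root in Hp. discriminate.
    + rewrite (chi_false (inr j = v)) by auto.
      assert (below (inr j) v <-> below (inl k) v) by (rewrite <- Hp; apply below_parent_iff; auto).
      destruct (classic (below (inl k) v)). rewrite !chi_true by tauto. ring. rewrite !chi_false by tauto. ring.
Qed.

Lemma subtree_mass_local v : subtree_mass a b v = rsum I (fun k => rsum J (fun j =>
   psi k j * (chi (parent (inl k) = inr j) * chi (inl k = v) - chi (parent (inr j) = inl k) * chi (inr j = v)))).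
Proof. rewrite subtree_mass_edges. apply rsum_ext; intros k Hk; apply rsum_ext; intros j Hj; apply edge_term_local; auto. Qed.

Lemma subtree_mass_customer_edge i j : (i < I)%nat -> parent (inl i) = inr j -> subtree_mass a b (inl i) = psi i j.
Proof. intros Hi Hp. rewrite subtree_mass_local.
  destruct (parent_customer i Hi) as [j' [Hj' [HjJ _]]]. rewrite Hp in Hj'. inversion Hj'. subst j'.
  rewrite (rsum_single I _ i Hi).
  - rewrite (rsum_single J _ j HjJ). rewrite chi_true, chi_true by auto. rewrite (chi_false (inr j = inl i)) by discriminate. ring.
    intros j1 Hj1 Hne. rewrite (chi_false (parent (inl i) = inr j1)) by congruence. rewrite (chi_false (inr j1 = inl i)) by discriminate. ring.
  - intros k Hk Hne. apply rsum_zero. intros j1 Hj1. rewrite (chi_false (inl k = inl i)) by congruence.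
    rewrite (chi_false (inr j1 = inl i)) by discriminate. ring. Qed.

Lemma subtree_mass_server_edge i j : (j < J)%nat -> parent (inr j) = inl i -> subtree_mass a b (inr j) = - psi i j.
Proof. intros Hj Hp.
  assert (Hj0 : j <> 0%nat). { intros e; subst. change (inr 0%nat) with root in Hp. rewrite parent_root in Hp. discriminate. }
  destruct (parent_server j Hj Hj0) as [i' [Hi' [HiI _]]]. rewrite Hp in Hi'. inversion Hi'. subst i'.
  rewrite subtree_mass_local. rewrite (rsum_single I _ i HiI).
  - rewrite (rsum_single J _ j Hj). rewrite (chi_false (inl i = inr j)) by discriminate. rewrite (chi_true (parent (inr j) = inl i)), (chi_true (inr j = inr j)) by auto. ring.
    intros j1 Hj1 Hne. rewrite (chi_false (inl i = inr j)) by discriminate. rewrite (chi_false (inr j1 = inr j)) by congruence. ring.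
  - intros k Hk Hne. apply rsum_zero. intros j1 Hj1. rewrite (chi_false (inl k = inr j)) by discriminate.
    destruct (Nat.eq_dec j1 j). subst. rewrite (chi_false (parent (inr j) = inl k)) by congruence. ring.
    rewrite (chi_false (inr j1 = inr j)) by congruence. ring. Qed.

Lemma G_spec_tree_flow i j : (i < I)%nat -> (j < J)%nat -> psi i j = tree_flow a b i j.
Proof. intros Hi Hj. unfold tree_flow. destruct Hpsi as [_ [_ H3]].
  destruct (adj i j) eqn:Ha.
  - destruct (tree_edge_parent i j Hi Hj Ha) as [Hp|Hp].
    + rewrite (chi_false (parent (inr j) = inl i)) by (apply parent_asym; auto). rewrite chi_true by auto.
      rewrite (subtree_mass_customer_edge i j Hi Hp). ring.
    + rewrite (chi_false (parent (inl i) = inr j)) by (intros H; apply (parent_asym i j Hi H); auto). rewrite chi_true by auto.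
      rewrite (subtree_mass_server_edge i j Hj Hp). ring.
  - rewrite H3 by auto. rewrite !chi_false. ring.
    + intros H. destruct (Nat.eq_dec j 0). subst. change (inr 0%nat) with root in H. rewrite parent_root in H. discriminate.
      destruct (parent_server j Hj n) as [i' [H1 [_ H2]]]. rewrite H in H1. inversion H1. subst. congruence.
    + intros H. destruct (parent_customer i Hi) as [j' [H1 [_ H2]]]. rewrite H in H1. inversion H1. subst. congruence.
Qed.
End FlowUniqueness.

Lemma Gmap_tree_flow a b i j : rsum I a = rsum J b -> (i < I)%nat -> (j < J)%nat ->
  Gmap I J adj a b i j = tree_flow a b i j.
Proof. intros H Hi Hj. apply (G_spec_tree_flow a b); auto. apply Gmap_spec; auto. Qed.

End TreeFlow.

(** * Drift of subtree sums *)

Lemma ppart_sub_npart s : ppart s - npart s = s.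
Proof. unfold ppart, npart, Rmax. destruct (Rle_dec s 0), (Rle_dec (-s) 0); lra. Qed.
Lemma ppart_nonneg s : 0 <= ppart s.
Proof. unfold ppart, Rmax. destruct (Rle_dec s 0); lra. Qed.
Lemma npart_nonneg s : 0 <= npart s.
Proof. unfold npart, Rmax. destruct (Rle_dec (-s) 0); lra. Qed.
Lemma ppart_add_npart s : ppart s + npart s = Rabs s.
Proof. unfold ppart, npart, Rmax, Rabs. destruct (Rle_dec s 0), (Rle_dec (-s) 0), (Rcase_abs s); lra. Qed.

Section Drift.
Variables (I J : nat) (adj : nat -> nat -> bool) (gam ell : nat -> R) (mu : nat -> nat -> R).
Hypothesis HJ : (1 <= J)%nat.
Hypothesis Htree : is_tree I J adj.
Hypothesis Hmu0 : forall i j, (i < I)%nat -> (j < J)%nat -> adj i j = false -> mu i j = 0.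

Let Hconn : gconnected I J adj := proj1 Htree.
Notation parent := (parent I J adj).
Notation below := (below I J adj).

Definition mu_up k := rsum J (fun j => chi (parent (inl k) = inr j) * mu k j).
Definition mu_down j := rsum I (fun k => chi (parent (inr j) = inl k) * mu k j).
Definition mu_down_parent k := rsum J (fun j => chi (parent (inl k) = inr j) * mu_down j).
Definition coupling k := mu_down_parent k - mu_up k.
(* [sbelow v k] is 1 exactly when customer class [k] lies strictly below [v]. *)
Definition sbelow v k := chi (below (parent (inl k)) (inl v)).

Variables (x uc us : nat -> R).
Hypothesis HU : inU I J uc us.

Definition sx := edot I x.
Definition alpha_hat k := x k - ppart sx * uc k.
Definition beta_hat j := - (npart sx * us j).

Lemma hat_balanced : rsum I alpha_hat = rsum J beta_hat.
Proof. destruct HU as [_ [_ [H1 H2]]]. unfold alpha_hat, beta_hat. rewrite rsum_minus, rsum_scal, rsum_opp, rsum_scal, H1, H2.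
  pose proof (ppart_sub_npart sx). unfold sx, edot in *. lra. Qed.

Notation Mhat := (subtree_mass I J adj alpha_hat beta_hat).

Lemma Ghat_tree_flow i j : (i < I)%nat -> (j < J)%nat -> Ghat I J adj uc us x i j = tree_flow I J adj alpha_hat beta_hat i j.
Proof. intros Hi Hj. unfold Ghat. apply (Gmap_tree_flow I J adj HJ Htree); auto. apply hat_balanced. Qed.

Definition subtree_drift v := rsum I (fun k => chi (below (inl k) (inl v)) * drift I J adj gam ell mu x uc us k).

Lemma drift_tree_flow k : (k < I)%nat -> drift I J adj gam ell mu x uc us k =
  - rsum J (fun j => mu k j * tree_flow I J adj alpha_hat beta_hat k j) - gam k * ppart sx * uc k + ell k.
Proof. intros Hk. unfold drift. f_equal. f_equal. f_equal. apply rsum_ext. intros j Hj.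
  destruct (adj k j) eqn:Ha. rewrite Ghat_tree_flow; auto. rewrite Hmu0; auto. ring. Qed.

Lemma tree_flow_customer_sum k : (k < I)%nat -> rsum J (fun j => mu k j * tree_flow I J adj alpha_hat beta_hat k j) =
  mu_up k * Mhat (inl k) - rsum J (fun j => chi (parent (inr j) = inl k) * mu k j * Mhat (inr j)).
Proof. intros Hk. unfold tree_flow, mu_up. rewrite <- rsum_scalr, <- rsum_minus. apply rsum_ext. intros; ring. Qed.

Lemma chi_below_customer_split k v : (k < I)%nat ->
  chi (below (inl k) v) = chi (inl k = v) + chi (below (parent (inl k)) v).
Proof. intros Hk. destruct (vertex_eq_dec (inl k) v) as [<-|ne].
  - rewrite chi_true by apply below_refl. rewrite chi_true by auto. rewrite chi_false; [ring|].
    apply (parent_not_below I J adj HJ Hconn); [apply valid_customer; auto|discriminate].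
  - rewrite (chi_false (inl k = v)), (chi_below_parent I J adj) by auto. ring. Qed.

Lemma subtree_drift_expand v :
  subtree_drift v = - rsum I (fun k => chi (below (inl k) (inl v)) * (mu_up k * Mhat (inl k)))
    + rsum J (fun j => chi (below (inr j) (inl v)) * mu_down j * Mhat (inr j))
    + rsum I (fun k => chi (below (inl k) (inl v)) * (- gam k * ppart sx * uc k + ell k)).
Proof. unfold subtree_drift.
  rewrite (rsum_ext I _ (fun k => - (chi (below (inl k) (inl v)) * (mu_up k * Mhat (inl k)))
       + rsum J (fun j => chi (below (inr j) (inl v)) * (chi (parent (inr j) = inl k) * mu k j) * Mhat (inr j))
       + chi (below (inl k) (inl v)) * (- gam k * ppart sx * uc k + ell k))).
  - rewrite !rsum_plus, rsum_opp.
    rewrite (rsum_swap I J (fun k j => chi (below (inr j) (inl v)) * (chi (parent (inr j) = inl k) * mu k j) * Mhat (inr j))).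
    apply Rplus_eq_compat_r, Rplus_eq_compat_l, rsum_ext. intros j _.
    unfold mu_down. rewrite <- rsum_scal, <- rsum_scalr. apply rsum_ext; intros; ring.
  - intros k Hk. rewrite drift_tree_flow, tree_flow_customer_sum by auto.
    rewrite (rsum_ext J (fun j => chi (below (inr j) (inl v)) * (chi (parent (inr j) = inl k) * mu k j) * Mhat (inr j))
                        (fun j => chi (below (inl k) (inl v)) * (chi (parent (inr j) = inl k) * mu k j * Mhat (inr j)))).
    + rewrite rsum_scal. ring.
    + intros j _. destruct (classic (parent (inr j) = inl k)) as [Hp|Hp].
      * rewrite (chi_below_parent I J adj (inr j) (inl v)), Hp by discriminate. ring.
      * rewrite (chi_false (parent (inr j) = inl k)) by auto. ring. Qed.

Lemma server_mass_terms v :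
  rsum J (fun j => chi (below (inr j) (inl v)) * mu_down j * Mhat (inr j)) =
  rsum I (fun c => chi (below (parent (inl c)) (inl v)) * mu_down_parent c * Mhat (inl c))
  - rsum J (fun j => chi (below (inr j) (inl v)) * mu_down j * beta_hat j).
Proof.
  rewrite (rsum_ext J _ (fun j => rsum I (fun c => chi (below (inr j) (inl v)) * mu_down j * chi (parent (inl c) = inr j) * Mhat (inl c))
        - chi (below (inr j) (inl v)) * mu_down j * beta_hat j)).
  2:{ intros j Hj. pose proof (subtree_mass_server I J adj HJ Htree alpha_hat beta_hat j Hj) as Hs.
      replace (Mhat (inr j)) with (rsum I (fun c => chi (parent (inl c) = inr j) * Mhat (inl c)) - beta_hat j) by lra.
      rewrite Rmult_minus_distr_l, <- rsum_scal. f_equal. apply rsum_ext; intros; ring. }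
  rewrite rsum_minus, <- (rsum_swap I J). f_equal. apply rsum_ext. intros c _.
  unfold mu_down_parent. rewrite <- rsum_scal, <- rsum_scalr. apply rsum_ext; intros j _.
  destruct (classic (parent (inl c) = inr j)) as [->|Hp].
  - ring.
  - rewrite (chi_false (parent (inl c) = inr j)) by auto. ring. Qed.

Lemma subtree_drift_decomp v : (v < I)%nat ->
  subtree_drift v = - mu_up v * Mhat (inl v) + rsum I (fun k => sbelow v k * coupling k * Mhat (inl k))
         - rsum J (fun j => chi (below (inr j) (inl v)) * mu_down j * beta_hat j)
         + rsum I (fun k => chi (below (inl k) (inl v)) * (- gam k * ppart sx * uc k + ell k)).
Proof. intros Hv. rewrite subtree_drift_expand, server_mass_terms.
  rewrite (rsum_ext I (fun k => chi (below (inl k) (inl v)) * (mu_up k * Mhat (inl k)))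
            (fun k => chi ((inl k : vertex) = inl v) * (mu_up k * Mhat (inl k)) + sbelow v k * (mu_up k * Mhat (inl k)))).
  2:{ intros k Hk. rewrite chi_below_customer_split by auto. apply Rmult_plus_distr_r. }
  rewrite rsum_plus, (rsum_single I (fun k => chi ((inl k : vertex) = inl v) * _) v Hv).
  2:{ intros k Hk Hne. rewrite chi_false; [ring|congruence]. }
  rewrite chi_true by auto.
  assert (rsum I (fun k => sbelow v k * coupling k * Mhat (inl k)) =
     rsum I (fun c => chi (below (parent (inl c)) (inl v)) * mu_down_parent c * Mhat (inl c)) - rsum I (fun k => sbelow v k * (mu_up k * Mhat (inl k)))) as Hc.
  { rewrite <- rsum_minus. apply rsum_ext. intros; unfold sbelow, coupling. ring. }
  rewrite Hc. ring. Qed.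

End Drift.

(** * The weighted quadratic form *)

Lemma young_ineq (eta a b c : R) : eta > 0 -> 2 * a * c * b <= eta * a * a + c * c / eta * (b * b).
Proof. intros He. assert (0 <= (eta * a - c * b) * (eta * a - c * b)) by apply Rle_0_sqr.
  assert (eta * (2 * a * c * b) <= eta * (eta * a * a + c * c / eta * (b * b))).
  { replace (eta * (eta * a * a + c * c / eta * (b * b))) with (eta * eta * a * a + c * c * (b * b)) by (field; lra). nra. }
  apply Rmult_le_reg_l with eta; lra. Qed.

Lemma weighted_cross_le (wv wk yv yk c MA eta lam : R) :
  eta > 0 -> lam > 0 -> 0 <= wv -> 0 <= wk -> Rabs c <= MA -> (c <> 0 -> lam * wv <= wk) ->
  2 * wv * yv * (c * yk) <= wv * eta * (yv * yv) + wk * (MA * MA / (eta * lam)) * (yk * yk).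
Proof. intros Heta Hlam Hwv Hwk Hc Hord.
  pose proof (Rabs_pos c) as Hc0.
  assert (Hyv : 0 <= yv * yv) by apply Rle_0_sqr. assert (Hyk : 0 <= yk * yk) by apply Rle_0_sqr.
  assert (HM : 0 <= MA * MA / (eta * lam)) by (apply Rle_mult_inv_pos; nra).
  destruct (Req_dec c 0) as [->|Hne].
  { assert (0 <= wv * eta * (yv * yv)) by (apply Rmult_le_pos; [nra|auto]).
    assert (0 <= wk * (MA * MA / (eta * lam)) * (yk * yk)) by (apply Rmult_le_pos; [nra|auto]). nra. }
  assert (Hw : wv <= wk / lam).
  { apply Rmult_le_reg_l with lam; [lra|]. replace (lam * (wk / lam)) with wk by (field; lra). auto. }
  assert (Hcc : c * c / eta <= MA * MA / eta).
  { unfold Rdiv. apply Rmult_le_compat_r; [left; apply Rinv_0_lt_compat; lra|].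
    rewrite <- (Rabs_pos_eq (c * c)) by apply Rle_0_sqr. rewrite Rabs_mult. nra. }
  assert (Hwc : wv * (c * c / eta) <= wk * (MA * MA / (eta * lam))).
  { replace (wk * (MA * MA / (eta * lam))) with (wk / lam * (MA * MA / eta)) by (field; lra).
    apply Rmult_le_compat; auto. apply Rmult_le_pos; [apply Rle_0_sqr|left; apply Rinv_0_lt_compat; lra]. }
  pose proof (young_ineq eta yv yk c Heta) as Hy.
  replace (2 * wv * yv * (c * yk)) with (wv * (2 * yv * c * yk)) by ring.
  apply Rle_trans with (wv * (eta * yv * yv + c * c / eta * (yk * yk))); [apply Rmult_le_compat_l; auto|].
  replace (wv * (eta * yv * yv + c * c / eta * (yk * yk))) with (wv * eta * (yv * yv) + wv * (c * c / eta) * (yk * yk)) by ring.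
  apply Rplus_le_compat_l, Rmult_le_compat_r; auto. Qed.

Lemma rsum_rsum_add n f g :
  rsum n (fun v => rsum n (fun k => f v + g k)) = INR n * rsum n f + INR n * rsum n g.
Proof. rewrite (rsum_ext n _ (fun v => INR n * f v + rsum n g)).
  - rewrite rsum_plus, rsum_scal, rsum_const. ring.
  - intros v _. rewrite rsum_plus, rsum_const. ring. Qed.

(* The weights grow by the factor [lam] along each strict descent, which makes the
   off-diagonal part of the triangular system small against its diagonal. *)
Lemma weighted_dissipation n (w m A y : nat -> R) (Em : nat -> nat -> R) (mm MA lam : R) :
  mm > 0 -> lam > 0 -> lam * mm * mm >= 4 * INR n * INR n * MA * MA ->
  (forall v, (v < n)%nat -> 0 <= w v) ->
  (forall v, (v < n)%nat -> mm <= m v) ->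
  (forall k, (k < n)%nat -> Rabs (A k) <= MA) ->
  (forall v k, (v < n)%nat -> (k < n)%nat -> 0 <= Em v k <= 1) ->
  (forall v k, (v < n)%nat -> (k < n)%nat -> Em v k <> 0 -> lam * w v <= w k) ->
  rsum n (fun v => 2 * w v * y v * (- m v * y v + rsum n (fun k => Em v k * A k * y k)))
   <= - mm * rsum n (fun v => w v * (y v * y v)).
Proof. intros Hmm Hlam Hcond Hw Hm HA HE Hord.
  destruct n as [|n]; [simpl; lra|].
  assert (Hn : 0 < INR (S n)) by (apply lt_0_INR; lia).
  set (N := INR (S n)) in *. set (eta := mm / (2 * N)). set (B := MA * MA / (eta * lam)).
  assert (Heta : eta > 0) by (unfold eta; apply Rdiv_lt_0_compat; lra).
  set (T := rsum (S n) (fun v => w v * (y v * y v))).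
  assert (HT : 0 <= T) by (apply rsum_nonneg; intros; apply Rmult_le_pos; [apply Hw; auto|apply Rle_0_sqr]).
  assert (Hdiag : rsum (S n) (fun v => - 2 * m v * (w v * (y v * y v))) <= - 2 * mm * T).
  { unfold T. rewrite <- rsum_scal. apply rsum_le. intros v Hv. specialize (Hm v Hv). specialize (Hw v Hv).
    assert (0 <= w v * (y v * y v)) by (apply Rmult_le_pos; auto; apply Rle_0_sqr). nra. }
  assert (Hoff : rsum (S n) (fun v => rsum (S n) (fun k => 2 * w v * y v * (Em v k * A k * y k)))
                 <= N * eta * T + N * B * T).
  { eapply Rle_trans.
    - apply rsum_le; intros v Hv; apply rsum_le; intros k Hk.
      apply (weighted_cross_le (w v) (w k) (y v) (y k) (Em v k * A k) MA eta lam); auto.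
      + specialize (HE v k Hv Hk). rewrite Rabs_mult, (Rabs_pos_eq (Em v k)) by lra.
        specialize (HA k Hk). pose proof (Rabs_pos (A k)). nra.
      + intros Hne. apply Hord; auto. intros He. apply Hne. rewrite He. ring.
    - rewrite rsum_rsum_add. fold N. unfold T, B. rewrite <- !rsum_scal. right. f_equal; apply rsum_ext; intros; ring. }
  assert (Ne : N * eta = mm / 2) by (unfold eta; field; lra).
  assert (Nb : N * B <= mm / 2).
  { unfold B, eta. replace (N * (MA * MA / (mm / (2 * N) * lam))) with (2 * N * N * MA * MA / (mm * lam)) by (field; lra).
    apply Rmult_le_reg_r with (mm * lam). nra. unfold Rdiv. rewrite Rmult_assoc, Rinv_l by nra. nra. }
  assert (N * B * T <= mm / 2 * T) by (apply Rmult_le_compat_r; auto).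
  rewrite (rsum_ext (S n) _ (fun v => - 2 * m v * (w v * (y v * y v))
      + rsum (S n) (fun k => 2 * w v * y v * (Em v k * A k * y k)))).
  - rewrite rsum_plus. fold T. nra.
  - intros v _. rewrite Rmult_plus_distr_l, <- rsum_scal. f_equal; first [ring | apply rsum_ext; intros; ring]. Qed.

Lemma Rabs_le_rsum_Rabs n f : forall k, (k < n)%nat -> Rabs (f k) <= rsum n (fun k => Rabs (f k)).
Proof. intros k Hk. apply (rsum_term_le n (fun k => Rabs (f k))); auto. intros; apply Rabs_pos. Qed.

Lemma Rabs_rsum_le n (f g : nat -> R) : (forall k, (k < n)%nat -> Rabs (f k) <= g k) -> Rabs (rsum n f) <= rsum n g.
Proof. intros H. eapply Rle_trans. apply rsum_abs. apply rsum_le; auto. Qed.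

Section QuadraticForm.
Variables (I J : nat) (adj : nat -> nat -> bool) (gam ell : nat -> R) (mu : nat -> nat -> R).
Hypothesis HI : (1 <= I)%nat.
Hypothesis HJ : (1 <= J)%nat.
Hypothesis Htree : is_tree I J adj.
Hypothesis Hmu0 : forall i j, (i < I)%nat -> (j < J)%nat -> adj i j = false -> mu i j = 0.
Variable mm : R.
Hypothesis Hmm : mm > 0.
Hypothesis Hmpar : forall k, (k < I)%nat -> mm <= mu_up I J adj mu k.

Let Hconn : gconnected I J adj := proj1 Htree.
Notation parent := (parent I J adj).
Notation below := (below I J adj).
Notation depth := (depth I J adj).

Definition coupling_sum := rsum I (fun k => Rabs (coupling I J adj mu k)).
Definition ratio := 1 + 4 * INR I * INR I * coupling_sum * coupling_sum / (mm * mm).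
Definition weight v := ratio ^ depth (inl v).
Definition weight_sum := rsum I weight.

Lemma coupling_sum_nonneg : 0 <= coupling_sum.
Proof. apply rsum_nonneg; intros; apply Rabs_pos. Qed.
Lemma ratio_ge1 : 1 <= ratio.
Proof. unfold ratio. assert (0 <= 4 * INR I * INR I * coupling_sum * coupling_sum / (mm * mm)).
  { apply Rle_mult_inv_pos; [|nra]. pose proof (pos_INR I). pose proof coupling_sum_nonneg.
    repeat apply Rmult_le_pos; lra. } lra. Qed.
Lemma ratio_large : ratio * mm * mm >= 4 * INR I * INR I * coupling_sum * coupling_sum.
Proof. unfold ratio. assert (mm * mm > 0) by nra.
  replace ((1 + 4 * INR I * INR I * coupling_sum * coupling_sum / (mm * mm)) * mm * mm) with
    (mm * mm + 4 * INR I * INR I * coupling_sum * coupling_sum) by (field; lra). lra. Qed.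
Lemma weight_ge1 v : 1 <= weight v.
Proof. unfold weight. pose proof ratio_ge1. induction (depth (inl v)); simpl; nra. Qed.
Lemma weight_le_sum v : (v < I)%nat -> weight v <= weight_sum.
Proof. intros Hv. apply (rsum_term_le I weight); auto. intros; pose proof (weight_ge1 k); lra. Qed.
Lemma weight_sum_ge1 : 1 <= weight_sum.
Proof. pose proof (weight_le_sum 0 ltac:(lia)). pose proof (weight_ge1 0). lra. Qed.

Lemma sbelow_bounds v k : 0 <= sbelow I J adj v k <= 1.
Proof. apply chi_bounds. Qed.
Lemma weight_sbelow v k : (v < I)%nat -> (k < I)%nat -> sbelow I J adj v k <> 0 -> ratio * weight v <= weight k.
Proof. intros Hv Hk H. unfold sbelow in H.
  destruct (classic (below (parent (inl k)) (inl v))) as [Hd|Hd]; [|rewrite chi_false in H; tauto].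
  assert (Hvk : valid I J (inl k)) by (apply valid_customer; auto).
  pose proof (parent_spec I J adj HJ Hconn (inl k) Hvk ltac:(discriminate)) as [_ Hdp].
  pose proof (depth_below_le I J adj HJ Hconn _ _ (parent_valid I J adj HJ Hconn _ Hvk) Hd).
  unfold weight. replace (depth (inl k)) with (S (depth (inl v)) + (depth (inl k) - S (depth (inl v))))%nat by lia.
  rewrite pow_add. simpl. pose proof ratio_ge1.
  assert (1 <= ratio ^ (depth (inl k) - S (depth (inl v)))) by (apply pow_R1_Rle; lra).
  assert (0 <= ratio ^ depth (inl v)) by (apply pow_le; lra).
  assert (0 <= ratio * ratio ^ depth (inl v)) by nra.
  set (r := ratio ^ (depth (inl k) - S (depth (inl v)))) in *.
  replace (ratio * ratio ^ depth (inl v) * r) with ((ratio * ratio ^ depth (inl v)) * r) by ring. nra. Qed.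

(* The linear map x |-> (subtree_sum x v)_v is triangular, hence invertible, on a tree. *)
Definition chi_sub v k := chi (below (inl k) (inl v)).
Definition subtree_sum (x : nat -> R) v := rsum I (fun k => chi_sub v k * x k).
Definition Q (x : nat -> R) := rsum I (fun v => weight v * (subtree_sum x v * subtree_sum x v)).
Definition DQ i (x : nat -> R) := 2 * rsum I (fun v => weight v * chi_sub v i * subtree_sum x v).
Definition D2Q i j := 2 * rsum I (fun v => weight v * chi_sub v i * chi_sub v j).

Lemma Rabs_subtree_sum_le x v : Rabs (subtree_sum x v) <= INR I * norm I x.
Proof. eapply Rle_trans; [|apply rsum_Rabs_le_norm]. apply Rabs_rsum_le. intros k Hk.
  rewrite Rabs_mult. pose proof (chi_bounds (below (inl k) (inl v))). unfold chi_sub.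
  rewrite (Rabs_pos_eq (chi _)) by lra. pose proof (Rabs_pos (x k)). nra. Qed.

Lemma Q_nonneg x : 0 <= Q x.
Proof. apply rsum_nonneg. intros v Hv. pose proof (weight_ge1 v). apply Rmult_le_pos; [lra|apply Rle_0_sqr]. Qed.

Lemma subtree_sum_mass x v : (v < I)%nat -> subtree_sum x v = subtree_mass I J adj x (fun _ => 0) (inl v).
Proof. intros Hv. unfold subtree_mass, mass, subtree_sum, chi_sub. rewrite (rsum_zero J). rewrite Rminus_0_r. reflexivity. intros; ring. Qed.

Lemma coord_from_subtree_sums x k : (k < I)%nat ->
  x k = subtree_sum x k - rsum J (fun j => chi (parent (inr j) = inl k) * rsum I (fun c => chi (parent (inl c) = inr j) * subtree_sum x c)).
Proof. intros Hk. rewrite <- (subtree_mass_customer I J adj HJ Htree x (fun _ => 0) k Hk).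
  rewrite subtree_sum_mass by auto. f_equal. apply rsum_ext. intros j Hj. f_equal.
  pose proof (subtree_mass_server I J adj HJ Htree x (fun _ => 0) j Hj).
  rewrite (rsum_ext I _ (fun c => chi (parent (inl c) = inr j) * subtree_mass I J adj x (fun _ => 0) (inl c))). lra.
  intros c Hc. rewrite subtree_sum_mass; auto. Qed.

Lemma rsum_chi_parent_customer c : (c < I)%nat -> rsum J (fun j => chi (parent (inl c) = inr j)) = 1.
Proof. intros Hc. destruct (parent_customer I J adj HJ Htree c Hc) as [j0 [Hj0 [Hj0J _]]].
  rewrite (rsum_single J _ j0 Hj0J). apply chi_true; auto. intros j Hj Hne. apply chi_false. congruence. Qed.

Lemma Rabs_coord_le_subtree_sums x k : (k < I)%nat -> Rabs (x k) <= 2 * rsum I (fun c => Rabs (subtree_sum x c)).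
Proof. intros Hk. rewrite (coord_from_subtree_sums x k Hk).
  eapply Rle_trans. apply Rabs_triang. rewrite Rabs_Ropp.
  assert (Rabs (subtree_sum x k) <= rsum I (fun c => Rabs (subtree_sum x c))) by (apply (Rabs_le_rsum_Rabs I (subtree_sum x)); auto).
  assert (Rabs (rsum J (fun j => chi (parent (inr j) = inl k) * rsum I (fun c => chi (parent (inl c) = inr j) * subtree_sum x c)))
     <= rsum I (fun c => Rabs (subtree_sum x c))).
  { eapply Rle_trans. apply (Rabs_rsum_le J _ (fun j => rsum I (fun c => chi (parent (inl c) = inr j) * Rabs (subtree_sum x c)))).
    - intros j Hj. rewrite Rabs_mult. pose proof (chi_bounds (parent (inr j) = inl k)). rewrite (Rabs_pos_eq (chi _)) by lra.
      assert (Rabs (rsum I (fun c => chi (parent (inl c) = inr j) * subtree_sum x c)) <= rsum I (fun c => chi (parent (inl c) = inr j) * Rabs (subtree_sum x c))).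
      { apply Rabs_rsum_le. intros c Hc. rewrite Rabs_mult. pose proof (chi_bounds (parent (inl c) = inr j)). rewrite (Rabs_pos_eq (chi _)) by lra. lra. }
      assert (0 <= rsum I (fun c => chi (parent (inl c) = inr j) * Rabs (subtree_sum x c))).
      { apply rsum_nonneg. intros c Hc. pose proof (chi_bounds (parent (inl c) = inr j)). pose proof (Rabs_pos (subtree_sum x c)). nra. }
      pose proof (Rabs_pos (rsum I (fun c => chi (parent (inl c) = inr j) * subtree_sum x c))). nra.
    - rewrite rsum_swap. apply rsum_le. intros c Hc. rewrite rsum_scalr, rsum_chi_parent_customer by auto. lra. }
  lra. Qed.

Lemma sqnorm_le_subtree_sums x : sqnorm I x <= 4 * INR I * INR I * rsum I (fun v => subtree_sum x v * subtree_sum x v).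
Proof.
  set (S := rsum I (fun c => Rabs (subtree_sum x c))).
  assert (HS : S * S <= INR I * rsum I (fun v => subtree_sum x v * subtree_sum x v)).
  { pose proof (sqr_rsum_le I (fun c => Rabs (subtree_sum x c))). unfold S. simpl in H.
    rewrite (rsum_ext I (fun k => Rabs (subtree_sum x k) * (Rabs (subtree_sum x k) * 1)) (fun v => subtree_sum x v * subtree_sum x v)) in H.
    nra. intros k _. rewrite Rmult_1_r, <- Rabs_mult. apply Rabs_pos_eq. apply Rle_0_sqr. }
  assert (HS0 : 0 <= S) by (apply rsum_nonneg; intros; apply Rabs_pos).
  unfold sqnorm. eapply Rle_trans. apply (rsum_le I _ (fun _ => 4 * (S * S))).
  - intros k Hk. pose proof (Rabs_coord_le_subtree_sums x k Hk). fold S in H. pose proof (Rabs_pos (x k)).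
    assert (Rabs (x k) * Rabs (x k) = x k * x k) by (rewrite <- Rabs_mult; apply Rabs_pos_eq; apply Rle_0_sqr). nra.
  - rewrite rsum_const. pose proof (pos_INR I). nra. Qed.

Lemma subtree_sums_le_sqnorm x : rsum I (fun v => subtree_sum x v * subtree_sum x v) <= INR I * (INR I * INR I * sqnorm I x).
Proof. rewrite <- rsum_const. apply rsum_le. intros v Hv. pose proof (Rabs_subtree_sum_le x v).
  pose proof (norm_mul_self I x). pose proof (norm_nonneg I x). pose proof (pos_INR I).
  assert (Rabs (subtree_sum x v) * Rabs (subtree_sum x v) = subtree_sum x v * subtree_sum x v) by (rewrite <- Rabs_mult; apply Rabs_pos_eq; apply Rle_0_sqr).
  pose proof (Rabs_pos (subtree_sum x v)).
  assert (Rabs (subtree_sum x v) * Rabs (subtree_sum x v) <= (INR I * norm I x) * (INR I * norm I x)) by (apply Rmult_le_compat; auto).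
  nra. Qed.

Definition cQ := / (4 * INR I * INR I).
Definition CQ := weight_sum * (INR I * (INR I * INR I)).

Lemma Q_lower x : cQ * sqnorm I x <= Q x.
Proof. unfold cQ, Q. pose proof (sqnorm_le_subtree_sums x). pose proof (INR_pos I HI).
  assert (rsum I (fun v => subtree_sum x v * subtree_sum x v) <= rsum I (fun v => weight v * (subtree_sum x v * subtree_sum x v))).
  { apply rsum_le. intros v Hv. pose proof (weight_ge1 v). pose proof (Rle_0_sqr (subtree_sum x v)). unfold Rsqr in *. nra. }
  assert (4 * INR I * INR I * rsum I (fun v => subtree_sum x v * subtree_sum x v) <= 4 * INR I * INR I * rsum I (fun v => weight v * (subtree_sum x v * subtree_sum x v))).
  { apply Rmult_le_compat_l; [nra|auto]. }
  apply Rmult_le_reg_l with (4 * INR I * INR I). nra. rewrite <- Rmult_assoc, Rinv_r by nra. lra. Qed.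

Lemma Q_upper x : Q x <= CQ * sqnorm I x.
Proof. unfold CQ, Q. pose proof (subtree_sums_le_sqnorm x).
  assert (rsum I (fun v => weight v * (subtree_sum x v * subtree_sum x v)) <= weight_sum * rsum I (fun v => subtree_sum x v * subtree_sum x v)).
  { rewrite <- rsum_scal. apply rsum_le. intros v Hv. pose proof (weight_le_sum v Hv). pose proof (Rle_0_sqr (subtree_sum x v)). unfold Rsqr in *. nra. }
  pose proof weight_sum_ge1. nra. Qed.

Lemma DQ_sqr_le i x : (i < I)%nat -> DQ i x * DQ i x <= 4 * INR I * weight_sum * Q x.
Proof. intros Hi. unfold DQ.
  pose proof (sqr_rsum_le I (fun v => weight v * chi_sub v i * subtree_sum x v)). simpl in H.
  assert (rsum I (fun k => weight k * chi_sub k i * subtree_sum x k * (weight k * chi_sub k i * subtree_sum x k * 1)) <= weight_sum * Q x).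
  { unfold Q. rewrite <- rsum_scal. apply rsum_le. intros v Hv. pose proof (weight_le_sum v Hv). pose proof (weight_ge1 v).
    pose proof (chi_bounds (below (inl i) (inl v))). fold (chi_sub v i) in H2. pose proof (Rle_0_sqr (subtree_sum x v)). unfold Rsqr in *.
    assert (chi_sub v i * chi_sub v i <= 1) by nra.
    replace (weight v * chi_sub v i * subtree_sum x v * (weight v * chi_sub v i * subtree_sum x v * 1)) with (weight v * (chi_sub v i * chi_sub v i) * (weight v * (subtree_sum x v * subtree_sum x v))) by ring.
    assert (0 <= weight v * (subtree_sum x v * subtree_sum x v)) by nra.
    assert (weight v * (chi_sub v i * chi_sub v i) <= weight_sum) by nra. nra. }
  pose proof (INR_pos I HI). nra. Qed.

Lemma D2Q_bounds i : 0 <= D2Q i i <= 2 * weight_sum.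
Proof. unfold D2Q, weight_sum. split.
  - apply Rmult_le_pos; [lra|]. apply rsum_nonneg. intros v Hv. pose proof (weight_ge1 v). pose proof (chi_bounds (below (inl i) (inl v))). unfold chi_sub. nra.
  - apply Rmult_le_compat_l; [lra|]. apply rsum_le. intros v Hv. pose proof (weight_ge1 v). pose proof (chi_bounds (below (inl i) (inl v))). unfold chi_sub.
    set (c := chi (below (inl i) (inl v))) in *. assert (c * c <= 1) by nra.
    replace (weight v * c * c) with (weight v * (c * c)) by ring.
    rewrite <- (Rmult_1_r (weight v)) at 2. apply Rmult_le_compat_l; lra. Qed.

Section DriftBound.
Variables (x uc us : nat -> R).
Hypothesis HU : inU I J uc us.

Notation Mhat := (subtree_mass I J adj (alpha_hat I x uc) (beta_hat I x us)).
Notation s := (sx I x).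

Lemma uc_bounds k : (k < I)%nat -> 0 <= uc k <= 1.
Proof. intros Hk. destruct HU as [H1 [_ [H3 _]]]. split; auto. rewrite <- H3. apply (rsum_term_le I uc); auto. Qed.
Lemma us_bounds j : (j < J)%nat -> 0 <= us j <= 1.
Proof. intros Hj. destruct HU as [_ [H2 [_ H4]]]. split; auto. rewrite <- H4. apply (rsum_term_le J us); auto. Qed.

Lemma rsum_chi_convex_bounds n (P : nat -> Prop) (f : nat -> R) : (forall k, (k < n)%nat -> 0 <= f k) -> rsum n f = 1 ->
  0 <= rsum n (fun k => chi (P k) * f k) <= 1.
Proof. intros H1 H2. split. apply rsum_nonneg. intros k Hk. pose proof (chi_bounds (P k)). specialize (H1 k Hk). nra.
  rewrite <- H2. apply rsum_le. intros k Hk. pose proof (chi_bounds (P k)). specialize (H1 k Hk). nra. Qed.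

Lemma Mhat_subtree_sums k : Mhat (inl k) = subtree_sum x k - ppart s * subtree_sum uc k + npart s * rsum J (fun j => chi (below (inr j) (inl k)) * us j).
Proof. unfold subtree_mass, mass, subtree_sum, chi_sub, alpha_hat, beta_hat.
  rewrite (rsum_ext I _ (fun c => chi (below (inl c) (inl k)) * x c - ppart s * (chi (below (inl c) (inl k)) * uc c))) by (intros; ring).
  rewrite rsum_minus, rsum_scal.
  rewrite (rsum_ext J _ (fun j => - (npart s * (chi (below (inr j) (inl k)) * us j)))) by (intros; ring).
  rewrite rsum_opp, rsum_scal. unfold sx. ring. Qed.

Lemma Rabs_Mhat_sub_le k : Rabs (Mhat (inl k) - subtree_sum x k) <= Rabs s.
Proof. rewrite Mhat_subtree_sums. destruct HU as [H1 [H2 [H3 H4]]].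
  pose proof (rsum_chi_convex_bounds I (fun c => below (inl c) (inl k)) uc H1 H3) as [A1 A2].
  pose proof (rsum_chi_convex_bounds J (fun j => below (inr j) (inl k)) us H2 H4) as [B1 B2].
  fold (subtree_sum uc k) in A1, A2. unfold subtree_sum, chi_sub in A1, A2 |- *.
  set (a := rsum I (fun k0 => chi (below (inl k0) (inl k)) * uc k0)) in *.
  set (b := rsum J (fun j => chi (below (inr j) (inl k)) * us j)) in *.
  pose proof (ppart_nonneg s). pose proof (npart_nonneg s). pose proof (ppart_add_npart s).
  replace (rsum I (fun k0 => chi (below (inl k0) (inl k)) * x k0) - ppart s * a + npart s * b - rsum I (fun k0 => chi (below (inl k0) (inl k)) * x k0))
    with (- ppart s * a + npart s * b) by ring.
  apply Rabs_le. nra. Qed.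

Definition Mp := rsum I (fun k => Rabs (mu_up I J adj mu k)).
Definition Mn := rsum J (fun j => Rabs (mu_down I J adj mu j)).
Definition Mg := rsum I (fun k => Rabs (gam k)).
Definition Ml := rsum I (fun k => Rabs (ell k)).
Definition K1 := Mp + coupling_sum + Mn + Mg.
Definition K2 := Ml.

Definition mass_error k := Mhat (inl k) - subtree_sum x k.

Definition remainder v := subtree_drift I J adj gam ell mu x uc us v
  - (- mu_up I J adj mu v * subtree_sum x v + rsum I (fun k => sbelow I J adj v k * coupling I J adj mu k * subtree_sum x k)).

Lemma remainder_eq v : (v < I)%nat -> remainder v =
  - mu_up I J adj mu v * mass_error v + rsum I (fun k => sbelow I J adj v k * coupling I J adj mu k * mass_error k)
  - rsum J (fun j => chi (below (inr j) (inl v)) * mu_down I J adj mu j * beta_hat I x us j)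
  + rsum I (fun k => chi (below (inl k) (inl v)) * (- gam k * ppart s * uc k + ell k)).
Proof. intros Hv. unfold remainder, mass_error.
  rewrite (subtree_drift_decomp I J adj gam ell mu HJ Htree Hmu0 x uc us HU v Hv).
  rewrite (rsum_ext I (fun k => sbelow I J adj v k * coupling I J adj mu k * (Mhat (inl k) - subtree_sum x k))
    (fun k => sbelow I J adj v k * coupling I J adj mu k * Mhat (inl k) - sbelow I J adj v k * coupling I J adj mu k * subtree_sum x k))
    by (intros; ring).
  rewrite rsum_minus. ring. Qed.

Lemma Rabs_rsum_chi_le n (c a e : nat -> R) E :
  (forall k, (k < n)%nat -> 0 <= c k <= 1) -> (forall k, (k < n)%nat -> Rabs (e k) <= E) ->
  Rabs (rsum n (fun k => c k * a k * e k)) <= rsum n (fun k => Rabs (a k)) * E.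
Proof. intros Hc He. rewrite <- rsum_scalr. apply Rabs_rsum_le. intros k Hk.
  specialize (Hc k Hk). specialize (He k Hk). pose proof (Rabs_pos (a k)). pose proof (Rabs_pos (e k)).
  rewrite !Rabs_mult, (Rabs_pos_eq (c k)) by lra.
  assert (Rabs (a k) * Rabs (e k) <= Rabs (a k) * E) by (apply Rmult_le_compat_l; auto).
  assert (0 <= Rabs (a k) * Rabs (e k)) by (apply Rmult_le_pos; auto).
  replace (c k * Rabs (a k) * Rabs (e k)) with (c k * (Rabs (a k) * Rabs (e k))) by ring. nra. Qed.

Lemma Rabs_beta_hat_le j : (j < J)%nat -> Rabs (beta_hat I x us j) <= Rabs s.
Proof. intros Hj. unfold beta_hat. pose proof (us_bounds j Hj).
  rewrite Rabs_Ropp, Rabs_mult, (Rabs_pos_eq (us j)), (Rabs_pos_eq (npart _)) by (lra || apply npart_nonneg).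
  pose proof (ppart_add_npart s). pose proof (ppart_nonneg s). pose proof (npart_nonneg s). nra. Qed.

Lemma Rabs_ppart_uc_le k : (k < I)%nat -> Rabs (ppart s * uc k) <= Rabs s.
Proof. intros Hk. pose proof (uc_bounds k Hk).
  rewrite Rabs_mult, (Rabs_pos_eq (uc k)), (Rabs_pos_eq (ppart _)) by (lra || apply ppart_nonneg).
  pose proof (ppart_add_npart s). pose proof (ppart_nonneg s). pose proof (npart_nonneg s). nra. Qed.

Lemma Rabs_remainder_le v : (v < I)%nat -> Rabs (remainder v) <= K1 * Rabs s + K2.
Proof. intros Hv. rewrite remainder_eq by auto.
  assert (He : forall k, (k < I)%nat -> Rabs (mass_error k) <= Rabs s) by (intros; apply Rabs_Mhat_sub_le).
  assert (T1 : Rabs (- mu_up I J adj mu v * mass_error v) <= Mp * Rabs s).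
  { rewrite Rabs_mult, Rabs_Ropp. apply Rmult_le_compat; auto using Rabs_pos. apply Rabs_le_rsum_Rabs; auto. }
  assert (T2 : Rabs (rsum I (fun k => sbelow I J adj v k * coupling I J adj mu k * mass_error k)) <= coupling_sum * Rabs s).
  { apply Rabs_rsum_chi_le; auto. intros; apply sbelow_bounds. }
  assert (T3 : Rabs (rsum J (fun j => chi (below (inr j) (inl v)) * mu_down I J adj mu j * beta_hat I x us j)) <= Mn * Rabs s).
  { apply Rabs_rsum_chi_le; [intros; apply chi_bounds|apply Rabs_beta_hat_le]. }
  assert (T4 : Rabs (rsum I (fun k => chi (below (inl k) (inl v)) * (- gam k * ppart s * uc k + ell k))) <= Mg * Rabs s + Ml).
  { unfold Mg, Ml. rewrite <- rsum_scalr, <- rsum_plus. apply Rabs_rsum_le. intros k Hk.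
    pose proof (chi_bounds (below (inl k) (inl v))). pose proof (Rabs_ppart_uc_le k Hk).
    pose proof (Rabs_pos (gam k)). pose proof (Rabs_pos (ell k)).
    assert (Rabs (- gam k * ppart s * uc k + ell k) <= Rabs (gam k) * Rabs s + Rabs (ell k)).
    { eapply Rle_trans; [apply Rabs_triang|]. replace (- gam k * ppart s * uc k) with (- gam k * (ppart s * uc k)) by ring.
      rewrite Rabs_mult, Rabs_Ropp. apply Rplus_le_compat_r, Rmult_le_compat_l; auto. }
    rewrite Rabs_mult, (Rabs_pos_eq (chi _)) by lra.
    pose proof (Rabs_pos (- gam k * ppart s * uc k + ell k)). nra. }
  unfold K1, K2.
  match goal with |- Rabs (?A + ?B - ?C + ?D) <= _ =>
    pose proof (Rabs_triang (A + B - C) D); pose proof (Rabs_triang (A + B) (- C));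
    pose proof (Rabs_triang A B); pose proof (Rabs_Ropp C) end.
  unfold Rminus in *. lra. Qed.

Definition drift_Q := rsum I (fun i => drift I J adj gam ell mu x uc us i * DQ i x).

Lemma drift_Q_subtree : drift_Q = rsum I (fun v => 2 * weight v * subtree_sum x v * subtree_drift I J adj gam ell mu x uc us v).
Proof. unfold drift_Q, DQ, subtree_drift.
  rewrite (rsum_ext I _ (fun i => rsum I (fun v => 2 * weight v * subtree_sum x v * (chi_sub v i * drift I J adj gam ell mu x uc us i)))).
  2:{ intros i Hi. rewrite <- rsum_scal, <- rsum_scal. apply rsum_ext; intros; ring. }
  rewrite rsum_swap. apply rsum_ext. intros v Hv. rewrite rsum_scal. unfold chi_sub. auto. Qed.

Definition cdiss := mm * cQ.
Definition Crem := 2 * weight_sum * INR I * INR I.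

Lemma drift_Q_le : drift_Q <= - cdiss * sqnorm I x + Crem * (K1 * Rabs s + K2) * norm I x.
Proof. rewrite drift_Q_subtree.
  rewrite (rsum_ext I _ (fun v => 2 * weight v * subtree_sum x v * (- mu_up I J adj mu v * subtree_sum x v + rsum I (fun k => sbelow I J adj v k * coupling I J adj mu k * subtree_sum x k))
     + 2 * weight v * subtree_sum x v * remainder v)) by (intros; unfold remainder; ring).
  rewrite rsum_plus.
  pose proof (weighted_dissipation I weight (mu_up I J adj mu) (coupling I J adj mu) (subtree_sum x) (sbelow I J adj) mm coupling_sum ratio Hmm
    ltac:(pose proof ratio_ge1; lra) ratio_large ltac:(intros; pose proof (weight_ge1 v); lra) Hmpar
    ltac:(intros; apply (Rabs_le_rsum_Rabs I (coupling I J adj mu)); auto) ltac:(intros; apply sbelow_bounds) weight_sbelow) as H1.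
  assert (H2 : rsum I (fun v => weight v * (subtree_sum x v * subtree_sum x v)) >= cQ * sqnorm I x) by (pose proof (Q_lower x); unfold Q in H; lra).
  assert (H3 : rsum I (fun v => 2 * weight v * subtree_sum x v * remainder v) <= Crem * (K1 * Rabs s + K2) * norm I x).
  { unfold Crem. assert (HK : 0 <= K1 * Rabs s + K2).
    { pose proof (Rabs_remainder_le 0 ltac:(lia)). pose proof (Rabs_pos (remainder 0)). lra. }
    eapply Rle_trans. apply (rsum_le I _ (fun v => 2 * weight_sum * (INR I * norm I x) * (K1 * Rabs s + K2))).
    - intros v Hv. pose proof (Rabs_remainder_le v Hv). pose proof (Rabs_subtree_sum_le x v). pose proof (weight_le_sum v Hv). pose proof (weight_ge1 v).
      assert (2 * weight v * subtree_sum x v * remainder v <= 2 * weight v * Rabs (subtree_sum x v) * Rabs (remainder v)).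
      { rewrite !Rmult_assoc. apply Rmult_le_compat_l. lra. apply Rmult_le_compat_l. lra.
        rewrite <- Rabs_mult. apply RRle_abs. }
      pose proof (Rabs_pos (subtree_sum x v)). pose proof (Rabs_pos (remainder v)).
      assert (Rabs (subtree_sum x v) * Rabs (remainder v) <= (INR I * norm I x) * (K1 * Rabs s + K2)) by (apply Rmult_le_compat; auto).
      assert (weight v * (Rabs (subtree_sum x v) * Rabs (remainder v)) <= weight_sum * ((INR I * norm I x) * (K1 * Rabs s + K2))).
      { apply Rmult_le_compat; try lra. apply Rmult_le_pos; auto. }
      replace (2 * weight v * Rabs (subtree_sum x v) * Rabs (remainder v)) with (2 * (weight v * (Rabs (subtree_sum x v) * Rabs (remainder v)))) in H6 by ring.
      lra.
    - rewrite rsum_const. right. ring. }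
  unfold cdiss. nra. Qed.

End DriftBound.
End QuadraticForm.

Section ContinuityRd.
Variable d : nat.
Notation cont := (continuous_on_Rd d).

Lemma cont_const c : cont (fun _ => c).
Proof. intros x Hx eps He. exists 1. split. lra. intros. rewrite Rminus_diag, Rabs_R0. lra. Qed.

Lemma cont_coord k : cont (fun x => x k).
Proof. intros x Hx eps He. exists eps. split; auto. intros y Hy Hn.
  destruct (lt_dec k d).
  - pose proof (Rabs_coord_le_norm d (vsub y x) k l). change (vsub y x k) with (y k - x k) in H. lra.
  - rewrite (Hx k), (Hy k) by lia. rewrite Rminus_diag, Rabs_R0. lra. Qed.

Lemma cont_plus f g : cont f -> cont g -> cont (fun x => f x + g x).
Proof. intros Hf Hg x Hx eps He.
  destruct (Hf x Hx (eps/2)) as [a [Ha Hfa]]; [lra|]. destruct (Hg x Hx (eps/2)) as [b [Hb Hgb]]; [lra|].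
  exists (Rmin a b). split. apply Rmin_pos; auto. intros y Hy Hn.
  specialize (Hfa y Hy ltac:(pose proof (Rmin_l a b); lra)). specialize (Hgb y Hy ltac:(pose proof (Rmin_r a b); lra)).
  replace (f y + g y - (f x + g x)) with ((f y - f x) + (g y - g x)) by ring.
  eapply Rle_lt_trans. apply Rabs_triang. lra. Qed.

Lemma cont_mult f g : cont f -> cont g -> cont (fun x => f x * g x).
Proof. intros Hf Hg x Hx eps He.
  set (A := Rabs (f x) + 1). set (B := Rabs (g x) + 1).
  assert (HA : A > 0) by (unfold A; pose proof (Rabs_pos (f x)); lra).
  assert (HB : B > 0) by (unfold B; pose proof (Rabs_pos (g x)); lra).
  set (e1 := Rmin 1 (eps / (2 * B))). set (e2 := eps / (2 * (A + 1))).
  assert (He1 : e1 > 0) by (apply Rmin_pos; [lra|apply Rdiv_lt_0_compat; lra]).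
  assert (He2 : e2 > 0) by (apply Rdiv_lt_0_compat; lra).
  destruct (Hf x Hx e1 He1) as [a [Ha Hfa]]. destruct (Hg x Hx e2 He2) as [b [Hb Hgb]].
  exists (Rmin a b). split. apply Rmin_pos; auto. intros y Hy Hn.
  specialize (Hfa y Hy ltac:(pose proof (Rmin_l a b); lra)). specialize (Hgb y Hy ltac:(pose proof (Rmin_r a b); lra)).
  replace (f y * g y - f x * g x) with (f y * (g y - g x) + (f y - f x) * g x) by ring.
  eapply Rle_lt_trans. apply Rabs_triang. rewrite !Rabs_mult.
  assert (Rabs (f y) <= A + 1).
  { unfold A. replace (f y) with (f x + (f y - f x)) by ring. eapply Rle_trans. apply Rabs_triang.
    pose proof (Rmin_l 1 (eps / (2 * B))). fold e1 in H. lra. }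
  assert (Rabs (f y) * Rabs (g y - g x) <= (A + 1) * e2).
  { apply Rmult_le_compat; auto using Rabs_pos. lra. }
  assert (Rabs (f y - f x) * Rabs (g x) <= (eps / (2 * B)) * B).
  { apply Rmult_le_compat; auto using Rabs_pos. pose proof (Rmin_r 1 (eps / (2 * B))). fold e1 in H1. lra.
    unfold B; lra. }
  assert ((A + 1) * e2 = eps / 2) by (unfold e2; field; lra).
  assert (eps / (2 * B) * B = eps / 2) by (field; lra).
  assert (Rabs (f y) * Rabs (g y - g x) <= (A + 1) * Rabs (g y - g x)) by (apply Rmult_le_compat_r; auto using Rabs_pos).
  assert ((A + 1) * Rabs (g y - g x) < (A + 1) * e2) by (apply Rmult_lt_compat_l; lra).
  lra. Qed.

Lemma cont_scal c f : cont f -> cont (fun x => c * f x).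
Proof. intros. apply cont_mult; auto. apply cont_const. Qed.

Lemma cont_rsum n (F : nat -> (nat -> R) -> R) : (forall t, (t < n)%nat -> cont (F t)) ->
  cont (fun x => rsum n (fun t => F t x)).
Proof. induction n; intros H; simpl. apply cont_const. apply cont_plus. apply IHn; intros; apply H; lia. apply H; lia. Qed.

Lemma cont_comp (phi : R -> R) f : cont f -> (forall x, inRd d x -> continuity_pt phi (f x)) -> cont (fun x => phi (f x)).
Proof. intros Hf Hphi x Hx eps He.
  destruct (Hphi x Hx eps He) as [a [Ha Hpa]].
  destruct (Hf x Hx a Ha) as [b [Hb Hfb]]. exists b. split; auto. intros y Hy Hn.
  specialize (Hfb y Hy Hn). destruct (Req_dec (f y) (f x)) as [e|ne].
  - rewrite e, Rminus_diag, Rabs_R0. lra.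
  - apply (Hpa (f y)). split. split. constructor. auto. simpl. unfold R_dist. auto. Qed.

End ContinuityRd.

Lemma dpl_ext f g x l : (forall t, f t = g t) -> derivable_pt_lim f x l -> derivable_pt_lim g x l.
Proof. intros H. replace g with f; auto. apply functional_extensionality; auto. Qed.

Lemma dpl_rsum n (F : nat -> R -> R) (l : nat -> R) x : (forall v, (v < n)%nat -> derivable_pt_lim (F v) x (l v)) ->
  derivable_pt_lim (fun t => rsum n (fun v => F v t)) x (rsum n l).
Proof. induction n; intros H; simpl.
  - apply (dpl_ext (fct_cte 0)). intros; reflexivity. apply derivable_pt_lim_const.
  - apply (dpl_ext (plus_fct (fun t => rsum n (fun v => F v t)) (F n))). intros; reflexivity.
    apply derivable_pt_lim_plus. apply IHn; intros; apply H; lia. apply H; lia. Qed.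

Lemma dpl_affine a b x : derivable_pt_lim (fun t => a + b * t) x b.
Proof. apply (dpl_ext (plus_fct (fct_cte a) (mult_real_fct b id))). intros; reflexivity.
  replace b with (0 + b * 1) at 2 by ring. apply derivable_pt_lim_plus. apply derivable_pt_lim_const.
  apply derivable_pt_lim_scal, derivable_pt_lim_id. Qed.

Lemma dpl_wsq w a b : derivable_pt_lim (fun t => w * ((a + b * t) * (a + b * t))) 0 (w * (2 * a * b)).
Proof. apply (dpl_ext (mult_real_fct w (mult_fct (fun t => a + b * t) (fun t => a + b * t)))). intros; reflexivity.
  apply derivable_pt_lim_scal.
  pose proof (derivable_pt_lim_mult (fun t => a+b*t) (fun t => a+b*t) 0 b b (dpl_affine a b 0) (dpl_affine a b 0)) as H.
  cbv beta in H. replace (b * (a + b * 0) + (a + b * 0) * b) with (2 * a * b) in H by ring. exact H. Qed.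

Lemma dpl_Rpower_comp (g : R -> R) p x l : 0 < g x -> derivable_pt_lim g x l ->
  derivable_pt_lim (fun t => Rpower (g t) p) x (p * Rpower (g x) (p - 1) * l).
Proof. intros Hg Hd. apply (dpl_ext (comp (fun y => Rpower y p) g)). intros; reflexivity.
  apply derivable_pt_lim_comp; auto. apply derivable_pt_lim_power; auto. Qed.

Lemma continuity_pt_Rpower_1plus a y : 0 <= y -> continuity_pt (fun z => Rpower (1 + z) a) y.
Proof. intros Hy. apply derivable_continuous_pt. exists (a * Rpower (1 + y) (a - 1) * 1).
  apply (dpl_Rpower_comp (fun z => 1 + z) a y 1). lra.
  apply (dpl_ext (fun z => 1 + 1 * z)). intros; ring. apply dpl_affine. Qed.

Lemma rsum_mult_shift d (f : nat -> R) x i t : (i < d)%nat ->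
  rsum d (fun k => f k * shift x i t k) = rsum d (fun k => f k * x k) + f i * t.
Proof. intros Hi. unfold shift.
  rewrite (rsum_ext d _ (fun k => f k * x k + (if Nat.eqb k i then f k * t else 0))).
  2:{ intros k Hk. destruct (Nat.eqb k i); ring. }
  rewrite rsum_plus. f_equal. rewrite (rsum_single d _ i Hi). rewrite Nat.eqb_refl; auto.
  intros k Hk Hne. apply Nat.eqb_neq in Hne. rewrite Hne. auto. Qed.

Section PowerOfQuadraticForm.
Variables (d n : nat) (c : nat -> nat -> R) (w : nat -> R) (p kappa : R).
Hypothesis Hw : forall v, (v < n)%nat -> 0 <= w v.

Definition lform x v := rsum d (fun k => c v k * x k).
Definition qform x := rsum n (fun v => w v * (lform x v * lform x v)).
Definition Dqform i x := 2 * rsum n (fun v => w v * c v i * lform x v).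
Definition D2qform i j := 2 * rsum n (fun v => w v * c v i * c v j).
Definition Vpow x := kappa * Rpower (1 + qform x) p.
Definition DVpow i x := kappa * p * Rpower (1 + qform x) (p - 1) * Dqform i x.
Definition D2Vpow i j x := kappa * p * (p - 1) * Rpower (1 + qform x) (p - 2) * Dqform j x * Dqform i x
                        + kappa * p * Rpower (1 + qform x) (p - 1) * D2qform i j.

Lemma qform_nonneg x : 0 <= qform x.
Proof. apply rsum_nonneg. intros v Hv. apply Rmult_le_pos; auto. apply Rle_0_sqr. Qed.

Lemma lform_shift x v i t : (i < d)%nat -> lform (shift x i t) v = lform x v + c v i * t.
Proof. intros Hi. unfold lform. apply rsum_mult_shift; auto. Qed.

Lemma Dqform_shift x i j t : (j < d)%nat -> Dqform i (shift x j t) = Dqform i x + D2qform i j * t.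
Proof. intros Hj. unfold Dqform, D2qform.
  rewrite (rsum_ext n _ (fun v => w v * c v i * lform x v + w v * c v i * c v j * t)).
  rewrite rsum_plus, rsum_scalr. ring. intros v Hv. rewrite lform_shift by auto. ring. Qed.

Lemma qform_deriv x i : (i < d)%nat -> derivable_pt_lim (fun t => qform (shift x i t)) 0 (Dqform i x).
Proof. intros Hi. unfold qform.
  apply (dpl_ext (fun t => rsum n (fun v => w v * ((lform x v + c v i * t) * (lform x v + c v i * t))))).
  { intros t. apply rsum_ext. intros v Hv. rewrite lform_shift; auto. }
  replace (Dqform i x) with (rsum n (fun v => w v * (2 * lform x v * c v i))).
  apply dpl_rsum. intros v Hv. apply dpl_wsq.
  unfold Dqform. rewrite <- rsum_scal. apply rsum_ext; intros; ring. Qed.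

Lemma Vpow_partial x i : (i < d)%nat -> has_partial Vpow i x (DVpow i x).
Proof. intros Hi. unfold has_partial, Vpow, DVpow.
  assert (Hx0 : shift x i 0 = x). { apply functional_extensionality. intros k. unfold shift. destruct (Nat.eqb k i); ring. }
  apply (dpl_ext (mult_real_fct kappa (fun t => Rpower (1 + qform (shift x i t)) p))). intros; reflexivity.
  replace (kappa * p * Rpower (1 + qform x) (p - 1) * Dqform i x) with (kappa * (p * Rpower (1 + qform (shift x i 0)) (p - 1) * Dqform i x))
    by (rewrite Hx0; ring).
  apply derivable_pt_lim_scal. apply (dpl_Rpower_comp (fun t => 1 + qform (shift x i t))).
  pose proof (qform_nonneg (shift x i 0)). lra.
  apply (dpl_ext (plus_fct (fct_cte 1) (fun t => qform (shift x i t)))). intros; reflexivity.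
  replace (Dqform i x) with (0 + Dqform i x) by ring. apply derivable_pt_lim_plus. apply derivable_pt_lim_const.
  apply qform_deriv; auto. Qed.

Lemma dpl_eq f x l l' : derivable_pt_lim f x l -> l = l' -> derivable_pt_lim f x l'.
Proof. intros H e; subst; auto. Qed.

Lemma DVpow_partial x i j : (j < d)%nat -> has_partial (DVpow i) j x (D2Vpow i j x).
Proof. intros Hj. unfold has_partial, DVpow, D2Vpow.
  assert (Hx0 : shift x j 0 = x). { apply functional_extensionality. intros k. unfold shift. destruct (Nat.eqb k j); ring. }
  apply (dpl_ext (mult_fct (mult_real_fct (kappa * p) (fun t => Rpower (1 + qform (shift x j t)) (p - 1))) (fun t => Dqform i x + D2qform i j * t))).
  { intros t. unfold mult_real_fct, mult_fct. rewrite Dqform_shift by auto. ring. }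
  set (F1 := mult_real_fct (kappa * p) (fun t => Rpower (1 + qform (shift x j t)) (p - 1))).
  assert (H1 : derivable_pt_lim F1 0 (kappa * p * ((p - 1) * Rpower (1 + qform (shift x j 0)) (p - 1 - 1) * Dqform j x))).
  { apply derivable_pt_lim_scal. apply (dpl_Rpower_comp (fun t => 1 + qform (shift x j t))).
    pose proof (qform_nonneg (shift x j 0)). lra.
    apply (dpl_ext (plus_fct (fct_cte 1) (fun t => qform (shift x j t)))). intros; reflexivity.
    replace (Dqform j x) with (0 + Dqform j x) by ring. apply derivable_pt_lim_plus. apply derivable_pt_lim_const.
    apply qform_deriv; auto. }
  pose proof (derivable_pt_lim_mult F1 (fun t => Dqform i x + D2qform i j * t) 0 _ _ H1 (dpl_affine (Dqform i x) (D2qform i j) 0)) as H2.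
  eapply dpl_eq. exact H2. unfold F1, mult_real_fct. cbv beta. rewrite Hx0.
  replace (p - 1 - 1) with (p - 2) by ring. ring. Qed.

Lemma lform_cont v : continuous_on_Rd d (fun x => lform x v).
Proof. unfold lform. apply (cont_rsum d d (fun k x => c v k * x k)). intros. apply cont_scal, cont_coord. Qed.
Lemma qform_cont : continuous_on_Rd d qform.
Proof. unfold qform. apply (cont_rsum d n (fun v x => w v * (lform x v * lform x v))). intros. apply cont_scal, cont_mult; apply lform_cont. Qed.
Lemma Dqform_cont i : continuous_on_Rd d (Dqform i).
Proof. unfold Dqform. apply cont_scal. apply (cont_rsum d n (fun v x => w v * c v i * lform x v)). intros. apply cont_scal, lform_cont. Qed.
Lemma Rpower_qform_cont a : continuous_on_Rd d (fun x => Rpower (1 + qform x) a).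
Proof. apply (cont_comp d (fun z => Rpower (1 + z) a) qform). apply qform_cont. intros. apply continuity_pt_Rpower_1plus, qform_nonneg. Qed.

Lemma Vpow_C2 : C2_with d Vpow DVpow D2Vpow.
Proof. split; [|split; [|split; [|split]]].
  - unfold Vpow. apply cont_scal, Rpower_qform_cont.
  - intros i Hi. unfold DVpow. apply cont_mult. apply cont_scal. apply Rpower_qform_cont. apply Dqform_cont.
  - intros i j Hi Hj. unfold D2Vpow. apply cont_plus.
    + apply cont_mult; [|apply Dqform_cont]. apply cont_mult; [|apply Dqform_cont]. apply cont_scal, Rpower_qform_cont.
    + apply cont_mult; [|apply cont_const]. apply cont_scal, Rpower_qform_cont.
  - intros x i Hx Hi. apply Vpow_partial; auto.
  - intros x i j Hx Hi Hj. apply DVpow_partial; auto. Qed.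

End PowerOfQuadraticForm.

(** * Powers and the minimal running cost *)

Lemma Rpower_pos a b : 0 < Rpower a b.
Proof. unfold Rpower. apply exp_pos. Qed.

Lemma Rpower_pred_mul t p : 0 < t -> Rpower t (p - 1) * t = Rpower t p.
Proof. intros Ht. rewrite <- (Rpower_1 t) at 2 by auto. rewrite <- Rpower_plus. f_equal. ring. Qed.

Section PowerCost.
Variable m : R.
Hypothesis Hm : m >= 1.

Lemma rpow_le0 a : a <= 0 -> rpow a m = 0.
Proof. intros H. unfold rpow. destruct (Rle_dec a 0); [auto|lra]. Qed.
Lemma rpow_pos_eq a : 0 < a -> rpow a m = Rpower a m.
Proof. intros H. unfold rpow. destruct (Rle_dec a 0); [lra|auto]. Qed.
Lemma rpow_nonneg a : 0 <= rpow a m.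
Proof. unfold rpow. destruct (Rle_dec a 0). lra. left; apply Rpower_pos. Qed.
Lemma rpow_pos a : 0 < a -> 0 < rpow a m.
Proof. intros H. rewrite rpow_pos_eq by auto. apply Rpower_pos. Qed.
Lemma Rpower_le_self a : 0 < a <= 1 -> Rpower a m <= a.
Proof. intros H. unfold Rpower. rewrite <- (exp_ln a) at 2 by lra.
  assert (ln a <= 0). { destruct (Req_dec a 1). subst; rewrite ln_1; lra. left. rewrite <- ln_1. apply ln_increasing; lra. }
  destruct (Req_dec (m * ln a) (ln a)). rewrite H1; lra. left. apply exp_increasing. nra. Qed.
Lemma rpow_le_self a : 0 <= a <= 1 -> rpow a m <= a.
Proof. intros H. destruct (Req_dec a 0). subst. rewrite rpow_le0; lra. rewrite rpow_pos_eq by lra. apply Rpower_le_self; lra. Qed.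
Lemma Rpower_ge_self a : 1 <= a -> a <= Rpower a m.
Proof. intros H. rewrite <- (Rpower_1 a) at 1 by lra. apply Rle_Rpower; lra. Qed.
Lemma rpow_ge_self a : 1 <= a -> a <= rpow a m.
Proof. intros H. rewrite rpow_pos_eq by lra. apply Rpower_ge_self; auto. Qed.
Lemma rpow_1 a : 0 <= a -> rpow a 1 = a.
Proof. intros H. unfold rpow. destruct (Rle_dec a 0). lra. apply Rpower_1; lra. Qed.

Lemma continuity_pt_Rpower a y : 0 < y -> continuity_pt (fun z => Rpower z a) y.
Proof. intros Hy. apply derivable_continuous_pt. exists (a * Rpower y (a - 1)). apply derivable_pt_lim_power; auto. Qed.

Lemma continuity_pt_rpow y : continuity_pt (fun z => rpow z m) y.
Proof. intros eps He.
  destruct (Rlt_le_dec 0 y) as [Hy|Hy].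
  - destruct (continuity_pt_Rpower m y Hy eps He) as [a [Ha Hpa]].
    exists (Rmin a (y / 2)). split. apply Rmin_pos; lra. intros z [[_ Hz1] Hz2]. simpl in *. unfold R_dist in *.
    pose proof (Rmin_l a (y/2)). pose proof (Rmin_r a (y/2)).
    assert (0 < z) by (apply Rabs_def2 in Hz2; lra).
    rewrite !rpow_pos_eq by lra. apply (Hpa z). split. split. constructor. auto. simpl. unfold R_dist. lra.
  - exists (Rmin 1 eps). split. apply Rmin_pos; lra. intros z [[_ Hz1] Hz2]. simpl in *. unfold R_dist in *.
    pose proof (Rmin_l 1 eps). pose proof (Rmin_r 1 eps). apply Rabs_def2 in Hz2.
    destruct (Rle_dec y 0); [|lra]. rewrite (rpow_le0 y) by lra. rewrite Rminus_0_r.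
    destruct (Rle_dec z 0). rewrite rpow_le0 by lra. rewrite Rabs_R0. lra.
    rewrite Rabs_pos_eq by apply rpow_nonneg. assert (rpow z m <= z) by (apply rpow_le_self; lra). lra. Qed.

Lemma rpow_tangent_le u v : 0 <= u -> 0 < v -> Rpower v m + m * Rpower v (m - 1) * (u - v) <= rpow u m.
Proof. intros Hu Hv.
  destruct (Req_dec u 0) as [e|ne].
  { subst. rewrite rpow_le0 by lra. replace (m * Rpower v (m - 1) * (0 - v)) with (- m * (Rpower v (m - 1) * v)) by ring.
    rewrite Rpower_pred_mul by auto. pose proof (Rpower_pos v m). nra. }
  rewrite rpow_pos_eq by lra.
  assert (Hd : forall c, 0 < c -> derivable_pt_lim (fun z => Rpower z m) c (m * Rpower c (m - 1))) by (intros; apply derivable_pt_lim_power; auto).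
  destruct (Rtotal_order u v) as [Hlt|[Heq|Hgt]].
  - destruct (MVT_cor2 (fun z => Rpower z m) (fun z => m * Rpower z (m - 1)) u v Hlt) as [c [Hc1 Hc2]].
    { intros c Hc. apply Hd. lra. }
    assert (Rpower c (m - 1) <= Rpower v (m - 1)) by (apply Rle_Rpower_l; lra).
    assert (m * Rpower c (m - 1) * (v - u) <= m * Rpower v (m - 1) * (v - u)).
    { apply Rmult_le_compat_r. lra. apply Rmult_le_compat_l; lra. }
    lra.
  - subst. lra.
  - destruct (MVT_cor2 (fun z => Rpower z m) (fun z => m * Rpower z (m - 1)) v u Hgt) as [c [Hc1 Hc2]].
    { intros c Hc. apply Hd. lra. }
    assert (Rpower v (m - 1) <= Rpower c (m - 1)) by (apply Rle_Rpower_l; lra).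
    assert (m * Rpower v (m - 1) * (u - v) <= m * Rpower c (m - 1) * (u - v)).
    { apply Rmult_le_compat_r. lra. apply Rmult_le_compat_l; lra. }
    lra. Qed.

Definition simplex (n : nat) (u : nat -> R) := (forall i, (i < n)%nat -> 0 <= u i) /\ rsum n u = 1.
Definition wpow (n : nat) (xi u : nat -> R) := rsum n (fun i => xi i * rpow (u i) m).

Lemma ex_argmin n (f : nat -> R) : (1 <= n)%nat -> exists i0, (i0 < n)%nat /\ forall i, (i < n)%nat -> f i0 <= f i.
Proof. induction n; intros H. lia. destruct n. exists 0%nat. split. lia. intros i Hi. assert (i = 0%nat) by lia. subst; lra.
  destruct (IHn ltac:(lia)) as [i0 [Hi0 Hmin]]. destruct (Rle_dec (f i0) (f (S n))).
  - exists i0. split. lia. intros i Hi. destruct (Nat.eq_dec i (S n)). subst; auto. apply Hmin; lia.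
  - exists (S n). split. lia. intros i Hi. destruct (Nat.eq_dec i (S n)). subst; lra. specialize (Hmin i ltac:(lia)). lra. Qed.

Lemma simplex_ex_pos n u : simplex n u -> exists i, (i < n)%nat /\ 0 < u i.
Proof. intros [H1 H2]. destruct (classic (exists i, (i < n)%nat /\ 0 < u i)) as [H|H]; auto.
  exfalso. assert (rsum n u <= 0). { rewrite <- (rsum_0 n). apply rsum_le. intros k Hk.
    destruct (Rle_dec (u k) 0); auto. exfalso; apply H. exists k; split; auto; lra. } lra. Qed.

Lemma wpow_pos n xi u : (forall i, (i < n)%nat -> xi i > 0) -> simplex n u -> 0 < wpow n xi u.
Proof. intros Hxi Hu. destruct (simplex_ex_pos n u Hu) as [i [Hi Hui]].
  unfold wpow. eapply Rlt_le_trans; [|apply (rsum_term_le n (fun i => xi i * rpow (u i) m) i Hi)].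
  - apply Rmult_lt_0_compat. apply Hxi; auto. apply rpow_pos; auto.
  - intros k Hk. apply Rmult_le_pos. specialize (Hxi k Hk). lra. apply rpow_nonneg. Qed.

Lemma wpow_min_of_equal_marginals n xi us kap : (forall i, (i < n)%nat -> xi i > 0) ->
  simplex n us -> (forall i, (i < n)%nat -> 0 < us i) ->
  (forall i, (i < n)%nat -> xi i * (m * Rpower (us i) (m - 1)) = kap) ->
  forall u, simplex n u -> wpow n xi us <= wpow n xi u.
Proof. intros Hxi [_ Hus1] Hus Hk u [Hu0 Hu1]. unfold wpow.
  apply Rle_trans with (rsum n (fun i => xi i * (Rpower (us i) m + m * Rpower (us i) (m - 1) * (u i - us i)))).
  - rewrite (rsum_ext n (fun i => xi i * (Rpower (us i) m + m * Rpower (us i) (m - 1) * (u i - us i)))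
                        (fun i => xi i * rpow (us i) m + kap * (u i - us i))).
    + rewrite rsum_plus, rsum_scal, rsum_minus, Hu1, Hus1. lra.
    + intros i Hi. rewrite rpow_pos_eq by auto. rewrite <- (Hk i Hi). ring.
  - apply rsum_le. intros i Hi. apply Rmult_le_compat_l; [specialize (Hxi i Hi); lra|].
    apply rpow_tangent_le; auto. Qed.

Lemma wpow_ex_min_linear n xi : m = 1 -> (1 <= n)%nat ->
  exists us, simplex n us /\ forall u, simplex n u -> wpow n xi us <= wpow n xi u.
Proof. intros Hm1 Hn. destruct (ex_argmin n xi Hn) as [i0 [Hi0 Hmin]].
  assert (R1 : forall t, 0 <= t -> rpow t m = t) by (intros; rewrite Hm1; apply rpow_1; auto).
  exists (fun i => if Nat.eqb i i0 then 1 else 0). split.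
  - split; [intros i _; destruct (Nat.eqb i i0); lra|].
    rewrite (rsum_single n _ i0 Hi0), Nat.eqb_refl; auto.
    intros k _ Hne. apply Nat.eqb_neq in Hne. rewrite Hne; auto.
  - intros u [Hu1 Hu2]. unfold wpow.
    rewrite (rsum_single n _ i0 Hi0).
    2:{ intros k _ Hne. apply Nat.eqb_neq in Hne. rewrite Hne, R1 by lra. ring. }
    rewrite Nat.eqb_refl, R1 by lra.
    rewrite (rsum_ext n _ (fun i => xi i * u i)) by (intros; rewrite R1; auto).
    assert (xi i0 * rsum n u <= rsum n (fun i => xi i * u i)).
    { rewrite <- rsum_scal. apply rsum_le. intros i Hi. specialize (Hu1 i Hi). specialize (Hmin i Hi). nra. }
    rewrite Hu2 in H. lra. Qed.

(* For [m > 1] the minimiser is [us_i ∝ xi_i^(-1/(m-1))], which equalises the marginal costs. *)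
Lemma wpow_ex_min n xi : (1 <= n)%nat -> (forall i, (i < n)%nat -> xi i > 0) ->
  exists us, simplex n us /\ forall u, simplex n u -> wpow n xi us <= wpow n xi u.
Proof. intros Hn Hxi.
  destruct (Req_dec m 1) as [Hm1|Hm1]; [apply wpow_ex_min_linear; auto|].
  assert (Hm' : m - 1 > 0) by lra.
  set (a := fun i => Rpower (xi i) (- / (m - 1))). set (A := rsum n a).
  assert (Ha : forall i, 0 < a i) by (intros; apply Rpower_pos).
  assert (HA : 0 < A).
  { unfold A. eapply Rlt_le_trans; [apply (Ha 0%nat)|]. apply (rsum_term_le n a 0); [lia|]. intros; left; apply Ha. }
  set (us := fun i => a i / A).
  assert (Hus : forall i, 0 < us i) by (intros; unfold us; apply Rdiv_lt_0_compat; auto).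
  assert (Hsimp : simplex n us).
  { split; [intros; left; auto|]. unfold us. rewrite (rsum_ext n _ (fun i => / A * a i)) by (intros; unfold Rdiv; ring).
    rewrite rsum_scal. fold A. field. lra. }
  exists us. split; auto.
  apply (wpow_min_of_equal_marginals n xi us (m * Rpower A (1 - m))); auto.
  intros i Hi. specialize (Hxi i Hi).
  assert (E1 : Rpower (a i) (m - 1) = / xi i).
  { unfold a. rewrite Rpower_mult. replace (- / (m - 1) * (m - 1)) with (- (1)) by (field; lra).
    rewrite Rpower_Ropp, Rpower_1 by lra. auto. }
  assert (E2 : Rpower (/ A) (m - 1) = Rpower A (1 - m)).
  { replace (/ A) with (Rpower A (- (1))) by (rewrite Rpower_Ropp, Rpower_1; auto).
    rewrite Rpower_mult. f_equal; ring. }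
  unfold us, Rdiv. rewrite <- Rpower_mult_distr by (auto; apply Rinv_0_lt_compat; auto).
  rewrite E1, E2. field. lra. Qed.

End PowerCost.

Lemma Rpower_absorb B a p t : 0 <= B -> 0 < a -> 0 < p -> 1 <= t ->
  B * Rpower t (p - 1) - a * Rpower t p <= B * Rpower (2 * B / a + 1) p - a / 2 * Rpower t p.
Proof. intros HB Ha Hp Ht.
  pose proof (Rpower_pos t p). pose proof (Rpower_pos t (p - 1)).
  assert (HT : 0 <= B * Rpower (2 * B / a + 1) p) by (apply Rmult_le_pos; auto; left; apply Rpower_pos).
  destruct (Rle_dec (2 * B / a) t) as [Hle|Hlt].
  - assert (B * Rpower t (p - 1) <= a / 2 * Rpower t p).
    { rewrite <- (Rpower_pred_mul t p) by lra.
      assert (B <= a / 2 * t). { apply Rmult_le_reg_l with (2 / a). apply Rdiv_lt_0_compat; lra.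
        replace (2 / a * (a / 2 * t)) with t by (field; lra). replace (2 / a * B) with (2 * B / a) by (field; lra). auto. }
      replace (a / 2 * (Rpower t (p - 1) * t)) with ((a / 2 * t) * Rpower t (p - 1)) by ring.
      apply Rmult_le_compat_r; lra. }
    lra.
  - assert (Rpower t (p - 1) <= Rpower t p) by (apply Rle_Rpower; lra).
    assert (Rpower t p <= Rpower (2 * B / a + 1) p) by (apply Rle_Rpower_l; lra).
    assert (B * Rpower t (p - 1) <= B * Rpower (2 * B / a + 1) p) by (apply Rmult_le_compat_l; lra).
    nra. Qed.

Lemma Rpower_sqr s p : s <> 0 -> Rpower (s * s) p = Rpower (Rabs s) (2 * p).
Proof. intros Hs. assert (0 < Rabs s) by (apply Rabs_pos_lt; auto).
  replace (s * s) with (Rabs s * Rabs s) by (rewrite <- Rabs_mult; apply Rabs_pos_eq; apply Rle_0_sqr).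
  rewrite <- Rpower_mult_distr by auto. rewrite <- Rpower_plus. f_equal; ring. Qed.

Lemma Rpower_growth t C s p : 0 < C -> 0 < p -> 1 <= t -> t <= 1 + C * (s * s) ->
  Rpower t p <= Rpower 2 p + Rpower (2 * C) p * rpow (Rabs s) (2 * p).
Proof. intros HC Hp Ht Hts.
  assert (0 <= Rpower (2 * C) p * rpow (Rabs s) (2 * p)) by (apply Rmult_le_pos; [left; apply Rpower_pos|apply rpow_nonneg]).
  destruct (Rle_dec (C * (s * s)) 1).
  - assert (Rpower t p <= Rpower 2 p) by (apply Rle_Rpower_l; lra). lra.
  - assert (Hs : s <> 0) by (intros e; subst; lra).
    assert (Rpower t p <= Rpower (2 * C * (s * s)) p) by (apply Rle_Rpower_l; lra).
    rewrite <- Rpower_mult_distr in H0 by (try lra; pose proof (Rle_0_sqr s); unfold Rsqr in *; assert (0 < s * s) by (destruct (Rle_lt_or_eq_dec _ _ H1); auto; exfalso; apply Hs; nra); auto).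
    rewrite Rpower_sqr in H0 by auto. rewrite rpow_pos_eq by (apply Rabs_pos_lt; auto).
    pose proof (Rpower_pos 2 p). lra. Qed.

Lemma Rpower_lower q N nr c p : 0 < c -> 0 < p -> 0 <= q -> c * N <= q -> N = nr * nr -> 0 <= nr ->
  Rpower c p * rpow nr (2 * p) <= Rpower (1 + q) p.
Proof. intros Hc Hp Hq Hl HN Hnr.
  destruct (Req_dec nr 0) as [e|ne].
  - subst. rewrite rpow_le0 by lra. rewrite Rmult_0_r. left; apply Rpower_pos.
  - rewrite rpow_pos_eq by lra.
    assert (Rpower c p * Rpower nr (2 * p) = Rpower (c * N) p).
    { rewrite HN. rewrite <- Rpower_mult_distr by nra. rewrite <- Rpower_mult_distr by lra. rewrite <- Rpower_plus.
      f_equal. f_equal. ring. }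
    rewrite H. assert (0 < nr * nr) by (assert (0 < nr) by lra; nra).
    apply Rle_Rpower_l. lra. split. rewrite HN. apply Rmult_lt_0_compat; lra. lra. Qed.

Lemma norm_ext d f g : (forall k, (k < d)%nat -> f k = g k) -> norm d f = norm d g.
Proof. intros H. unfold norm. f_equal. apply rsum_ext. intros k Hk. rewrite H; auto. Qed.

Lemma norm_vsub_sym d x y : norm d (vsub x y) = norm d (vsub y x).
Proof. unfold norm. f_equal. apply rsum_ext. intros. unfold vsub. ring. Qed.

Lemma Rabs_norm_sub_le d x y : Rabs (norm d y - norm d x) <= norm d (vsub y x).
Proof. assert (H1 : norm d y <= norm d (vsub y x) + norm d x).
  { rewrite (norm_ext d y (fun k => vsub y x k + x k)) by (intros; unfold vsub; ring). apply norm_triang. }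
  assert (H2 : norm d x <= norm d (vsub x y) + norm d y).
  { rewrite (norm_ext d x (fun k => vsub x y k + y k)) by (intros; unfold vsub; ring). apply norm_triang. }
  rewrite norm_vsub_sym in H2. apply Rabs_le. lra. Qed.

Lemma continuous_norm d : continuous_on_Rd d (norm d).
Proof. intros x Hx eps He. exists eps. split; auto. intros y Hy Hn. eapply Rle_lt_trans. apply Rabs_norm_sub_le. auto. Qed.

Lemma continuous_edot d : continuous_on_Rd d (edot d).
Proof. unfold edot. apply (cont_rsum d d (fun k x => x k)). intros; apply cont_coord. Qed.

Lemma continuous_Rabs d f : continuous_on_Rd d f -> continuous_on_Rd d (fun x => Rabs (f x)).
Proof. intros Hf x Hx eps He. destruct (Hf x Hx eps He) as [a [Ha H]]. exists a. split; auto. intros y Hy Hn.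
  eapply Rle_lt_trans. apply Rabs_triang_inv2. auto. Qed.

Definition converges d (xs : nat -> nat -> R) y := forall eps, eps > 0 -> exists N, forall n, (n >= N)%nat -> norm d (vsub (xs n) y) < eps.

Lemma converges_le d f c xs y : continuous_on_Rd d f -> (forall n, inRd d (xs n) /\ f (xs n) <= c) -> inRd d y ->
  converges d xs y -> f y <= c.
Proof. intros Hf Hxs Hy Hc. destruct (Rle_dec (f y) c) as [|Hn]; auto. exfalso.
  destruct (Hf y Hy (f y - c)) as [a [Ha H]]; [lra|]. destruct (Hc a Ha) as [N HN].
  specialize (HN N (le_n _)). destruct (Hxs N) as [H1 H2]. specialize (H (xs N) H1 HN).
  apply Rabs_def2 in H. lra. Qed.

Lemma Kdelta_open d delta : is_open d (Kdelta d delta).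
Proof. intros x Hx [_ HK].
  set (f := fun z => Rabs (edot d z) + - delta * norm d z).
  assert (Hf : continuous_on_Rd d f).
  { unfold f. apply (cont_plus d (fun z => Rabs (edot d z)) (fun z => - delta * norm d z)).
    apply continuous_Rabs, continuous_edot. apply (cont_scal d (- delta) (norm d)); apply continuous_norm. }
  destruct (Hf x Hx (f x)) as [a [Ha H]]. unfold f; lra.
  exists a. unfold f in H.  split; auto. intros y Hy Hn. split; auto. specialize (H y Hy Hn). apply Rabs_def2 in H. lra.
Qed.

Lemma closure_Kdelta d delta y : closure d (Kdelta d delta) y -> Rabs (edot d y) >= delta * norm d y.
Proof. intros [Hy Hc]. destruct (Rge_dec (Rabs (edot d y)) (delta * norm d y)) as [|Hn]; auto. exfalso.
  set (f := fun z => delta * norm d z + -1 * Rabs (edot d z)).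
  assert (Hf : continuous_on_Rd d f).
  { unfold f. apply (cont_plus d (fun z => delta * norm d z) (fun z => -1 * Rabs (edot d z))).
    apply cont_scal, continuous_norm. apply (cont_scal d (-1) (fun z => Rabs (edot d z))). apply continuous_Rabs, continuous_edot. }
  destruct (Hf y Hy (f y)) as [a [Ha H]]. unfold f; lra.
  destruct (Hc a Ha) as [z [Hz [[_ HK] Hn2]]]. specialize (H z Hz Hn2). apply Rabs_def2 in H. unfold f in H. lra. Qed.

Lemma norm_vsub_triang d a b c : norm d (vsub a c) <= norm d (vsub a b) + norm d (vsub b c).
Proof. rewrite (norm_ext d (vsub a c) (fun k => vsub a b k + vsub b c k)) by (intros; unfold vsub; ring). apply norm_triang. Qed.

Lemma closure_converges d K xs y : (forall n, inRd d (xs n) /\ closure d K (xs n)) -> inRd d y -> converges d xs y -> closure d K y.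
Proof. intros Hxs Hy Hc. split; auto. intros eps He.
  destruct (Hc (eps/2)) as [N HN]. lra. specialize (HN N (le_n _)).
  destruct (Hxs N) as [_ [_ Hcl]]. destruct (Hcl (eps/2)) as [z [Hz [HK Hzn]]]. lra.
  exists z. split; auto. split; auto. pose proof (norm_vsub_triang d z (xs N) y). lra. Qed.

Lemma continuous_rpow_norm d m : m >= 1 -> continuous_on_Rd d (fun x => rpow (norm d x) m).
Proof. intros Hm. apply (cont_comp d (fun z => rpow z m) (norm d)). apply continuous_norm. intros; apply continuity_pt_rpow; auto. Qed.

(** * Verification of Hypothesis A *)

Lemma ppart_eq s : ppart s = (s + Rabs s) / 2.
Proof. unfold ppart, Rmax, Rabs. destruct (Rle_dec s 0), (Rcase_abs s); lra. Qed.
Lemma npart_eq s : npart s = (Rabs s - s) / 2.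
Proof. unfold npart, Rmax, Rabs. destruct (Rle_dec (-s) 0), (Rcase_abs s); lra. Qed.

Lemma rpow_ppart_add_npart s m : m >= 1 -> rpow (ppart s) m + rpow (npart s) m = rpow (Rabs s) m.
Proof. intros Hm. rewrite ppart_eq, npart_eq. unfold Rabs. destruct (Rcase_abs s).
  - rewrite (rpow_le0 m (( s + - s) / 2)) by lra. replace ((- s - s) / 2) with (- s) by field. ring.
  - rewrite (rpow_le0 m ((s - s) / 2)) by lra. replace ((s + s) / 2) with s by field. ring. Qed.

Lemma le_of_rpow_le m a L : m >= 1 -> 0 <= a -> rpow a m <= L -> a <= Rmax 1 L.
Proof. intros Hm Ha H. destruct (Rle_dec a 1). pose proof (Rmax_l 1 L); lra.
  pose proof (rpow_ge_self m Hm a ltac:(lra)). pose proof (Rmax_r 1 L). lra. Qed.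

Lemma continuity_pt_lipschitz (f : R -> R) x : (forall a b, Rabs (f a - f b) <= Rabs (a - b)) -> continuity_pt f x.
Proof. intros H eps He. exists eps. split; auto. intros y [_ Hy]. simpl in *. unfold R_dist in *.
  eapply Rle_lt_trans. apply H. auto. Qed.
Lemma ppart_lip a b : Rabs (ppart a - ppart b) <= Rabs (a - b).
Proof. rewrite !ppart_eq. pose proof (Rabs_triang_inv a b). pose proof (Rabs_triang_inv b a).
  rewrite (Rabs_minus_sym b a) in H0. apply Rabs_le. split.
  - assert (Rabs a - Rabs b >= - Rabs (a - b)) by lra. pose proof (Rabs_Ropp (a - b)).
    pose proof (RRle_abs (a - b)). pose proof (RRle_abs (- (a - b))). rewrite H2 in H4. lra.
  - pose proof (RRle_abs (a - b)). pose proof (RRle_abs (- (a - b))). rewrite Rabs_Ropp in H2. lra. Qed.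
Lemma npart_lip a b : Rabs (npart a - npart b) <= Rabs (a - b).
Proof. rewrite !npart_eq. pose proof (Rabs_triang_inv a b). pose proof (Rabs_triang_inv b a).
  rewrite (Rabs_minus_sym b a) in H0. apply Rabs_le. split.
  - pose proof (RRle_abs (a - b)). pose proof (RRle_abs (- (a - b))). rewrite Rabs_Ropp in H2. lra.
  - pose proof (RRle_abs (a - b)). pose proof (RRle_abs (- (a - b))). rewrite Rabs_Ropp in H2. lra. Qed.

Definition unit0 (i : nat) : R := if Nat.eqb i 0 then 1 else 0.

Lemma unit0_simplex n : (1 <= n)%nat -> (forall i, (i < n)%nat -> 0 <= unit0 i) /\ rsum n unit0 = 1.
Proof. intros Hn. split; [intros; unfold unit0; destruct (Nat.eqb i 0); lra|].
  rewrite (rsum_single n unit0 0) by (try lia; intros k _ Hk; unfold unit0; apply Nat.eqb_neq in Hk; rewrite Hk; auto).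
  reflexivity. Qed.

Section MinimalCost.
Variables (I J : nat) (m : R) (xi zeta : nat -> R).
Hypothesis HI : (1 <= I)%nat.
Hypothesis HJ : (1 <= J)%nat.
Hypothesis Hm : m >= 1.
Hypothesis Hxi : forall i, (i < I)%nat -> xi i > 0.
Hypothesis Hzeta : forall j, (j < J)%nat -> zeta j > 0.

Notation rc := (rcost I J m xi zeta).

Lemma inU_unit0 : inU I J unit0 unit0.
Proof. destruct (unit0_simplex I HI), (unit0_simplex J HJ). repeat split; auto. Qed.

Lemma ex_cost_minimizer : exists ucs uss, inU I J ucs uss /\
   (forall uc us, inU I J uc us -> wpow m I xi ucs <= wpow m I xi uc /\ wpow m J zeta uss <= wpow m J zeta us).
Proof. destruct (wpow_ex_min m Hm I xi HI Hxi) as [ucs [[Hu0 Hu1] Hu2]].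
  destruct (wpow_ex_min m Hm J zeta HJ Hzeta) as [uss [[Hv0 Hv1] Hv2]].
  exists ucs, uss. split; [repeat split; auto|].
  intros uc us [H1 [H2 [H3 H4]]]. split; [apply Hu2|apply Hv2]; split; auto. Qed.

Variables (ucs uss : nat -> R).
Hypothesis Hus : inU I J ucs uss.
Hypothesis Hmin : forall uc us, inU I J uc us ->
  wpow m I xi ucs <= wpow m I xi uc /\ wpow m J zeta uss <= wpow m J zeta us.

Definition Fx := wpow m I xi ucs.
Definition Fz := wpow m J zeta uss.
Definition cmin := Rmin Fx Fz.
Definition rmin x := rpow (ppart (edot I x)) m * Fx + rpow (npart (edot I x)) m * Fz.

Lemma cmin_pos : 0 < cmin.
Proof. destruct Hus as [H1 [H2 [H3 H4]]]. apply Rmin_pos.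
  - apply (wpow_pos m I xi ucs Hxi). split; auto.
  - apply (wpow_pos m J zeta uss Hzeta). split; auto. Qed.

Lemma rmin_le_rcost x uc us : inU I J uc us -> rmin x <= rc x uc us.
Proof. intros HU. destruct (Hmin uc us HU) as [A B]. unfold rmin, rcost. fold (wpow m I xi uc). fold (wpow m J zeta us).
  pose proof (rpow_nonneg m (ppart (edot I x))). pose proof (rpow_nonneg m (npart (edot I x))).
  unfold Fx, Fz. apply Rplus_le_compat; apply Rmult_le_compat_l; auto. Qed.

Lemma rmin_ge x : cmin * rpow (Rabs (edot I x)) m <= rmin x.
Proof. unfold rmin. rewrite <- (rpow_ppart_add_npart (edot I x) m Hm).
  pose proof (rpow_nonneg m (ppart (edot I x))). pose proof (rpow_nonneg m (npart (edot I x))).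
  pose proof (Rmin_l Fx Fz). pose proof (Rmin_r Fx Fz). fold cmin in H1, H2. nra. Qed.

Lemma rpow_Rabs_edot_le x uc us : inU I J uc us -> rpow (Rabs (edot I x)) m <= rc x uc us / cmin.
Proof. intros HU. pose proof cmin_pos. pose proof (rmin_ge x). pose proof (rmin_le_rcost x uc us HU).
  apply Rmult_le_reg_l with cmin; auto. replace (cmin * (rc x uc us / cmin)) with (rc x uc us) by (field; lra). lra. Qed.

Lemma continuous_rmin : continuous_on_Rd I rmin.
Proof. unfold rmin. apply cont_plus; apply cont_mult; try apply cont_const.
  - apply (cont_comp I (fun z => rpow z m) (fun x => ppart (edot I x))); [|intros; apply continuity_pt_rpow; auto].
    apply (cont_comp I ppart (edot I)); [apply continuous_edot|]. intros x _.
    apply continuity_pt_lipschitz, ppart_lip.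
  - apply (cont_comp I (fun z => rpow z m) (fun x => npart (edot I x))); [|intros; apply continuity_pt_rpow; auto].
    apply (cont_comp I npart (edot I)); [apply continuous_edot|]. intros x _.
    apply continuity_pt_lipschitz, npart_lip. Qed.

Lemma minU_rcost_iff lvl x : minU_le I J rc lvl x <-> inRd I x /\ rmin x <= lvl.
Proof. split.
  - intros [Hx [uc [us [HU Hr]]]]. split; auto. pose proof (rmin_le_rcost x uc us HU). lra.
  - intros [Hx HP]. split; auto. exists ucs, uss. split; [exact Hus|exact HP]. Qed.

End MinimalCost.

Section Generator.
Variables (I J : nat) (adj : nat -> nat -> bool) (lm gam ell : nat -> R) (mu : nat -> nat -> R) (m mm : R).
Hypothesis HI : (1 <= I)%nat.
Hypothesis HJ : (1 <= J)%nat.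
Hypothesis Hlam : forall i, (i < I)%nat -> lm i > 0.
Hypothesis Hm : m >= 1.
Hypothesis Hmm : mm > 0.

Notation Q := (Q I J adj mu mm).
Notation DQ := (DQ I J adj mu mm).
Notation W := (weight_sum I J adj mu mm).

Definition hm := m / 2.
Definition lam_sum := rsum I lm.
Definition Cdiff := lam_sum * (Rabs (hm - 1) * (4 * INR I * W) + 2 * W).

(* [V = kappa (1 + Q)^(m/2)], which grows like [|x|^m]. *)
Definition Vf kappa := Vpow I I (chi_sub I J adj) (weight I J adj mu mm) hm kappa.
Definition DVf kappa := DVpow I I (chi_sub I J adj) (weight I J adj mu mm) hm kappa.
Definition D2Vf kappa := D2Vpow I I (chi_sub I J adj) (weight I J adj mu mm) hm kappa.

Lemma hm_pos : 0 < hm.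
Proof. unfold hm; lra. Qed.

Lemma hm_double : 2 * hm = m.
Proof. unfold hm. field. Qed.

Lemma lam_sum_nonneg : 0 <= lam_sum.
Proof. apply rsum_nonneg. intros; left; apply Hlam; auto. Qed.

Lemma D2Vf_diag_le kappa x i : kappa > 0 -> (i < I)%nat ->
  D2Vf kappa i i x <= kappa * hm * Rpower (1 + Q x) (hm - 1) * (Rabs (hm - 1) * (4 * INR I * W) + 2 * W).
Proof. intros Hk Hi. unfold D2Vf, D2Vpow.
  change (qform I I (chi_sub I J adj) (weight I J adj mu mm) x) with (Q x).
  change (Dqform I I (chi_sub I J adj) (weight I J adj mu mm) i x) with (DQ i x).
  change (D2qform I (chi_sub I J adj) (weight I J adj mu mm) i i) with (D2Q I J adj mu mm i i).
  set (q := Q x). set (T := 1 + q).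
  assert (Hq : 0 <= q) by apply (Q_nonneg I J adj mu mm Hmm).
  set (P1 := Rpower T (hm - 1)). set (P2 := Rpower T (hm - 2)).
  assert (HP1 : 0 < P1) by apply Rpower_pos. assert (HP2 : 0 < P2) by apply Rpower_pos.
  assert (HP12 : P2 * T = P1).
  { unfold P1, P2. replace (hm - 2) with ((hm - 1) - 1) by ring. apply Rpower_pred_mul. unfold T; lra. }
  pose proof (DQ_sqr_le I J adj mu HI mm Hmm i x Hi) as HD. fold q in HD.
  pose proof (D2Q_bounds I J adj mu mm Hmm i) as HD2.
  pose proof hm_pos. pose proof (pos_INR I). pose proof (Rabs_pos (hm - 1)).
  pose proof (weight_sum_ge1 I J adj mu HI HJ mm Hmm).
  set (D := DQ i x) in *.
  assert (Hsq : (hm - 1) * P2 * (D * D) <= Rabs (hm - 1) * (4 * INR I * W) * P1).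
  { apply Rle_trans with (Rabs (hm - 1) * P2 * (4 * INR I * W * T)).
    - assert (0 <= D * D) by apply Rle_0_sqr.
      apply Rle_trans with (Rabs (hm - 1) * P2 * (D * D)).
      + apply Rmult_le_compat_r; auto. apply Rmult_le_compat_r; [lra|apply RRle_abs].
      + apply Rmult_le_compat_l; [apply Rmult_le_pos; lra|]. unfold T. nra.
    - rewrite <- HP12. right. ring. }
  assert (Hkh : 0 < kappa * hm) by nra.
  assert (Hsq2 : kappa * hm * ((hm - 1) * P2 * (D * D)) <= kappa * hm * (Rabs (hm - 1) * (4 * INR I * W) * P1))
    by (apply Rmult_le_compat_l; lra).
  assert (Hd2 : kappa * hm * P1 * D2Q I J adj mu mm i i <= kappa * hm * P1 * (2 * W))
    by (apply Rmult_le_compat_l; [nra|lra]).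
  nra. Qed.

Lemma gen_Vf_le kappa x uc us : kappa > 0 ->
  gen I J adj lm gam ell mu (DVf kappa) (D2Vf kappa) x uc us <=
  kappa * hm * Rpower (1 + Q x) (hm - 1) * (Cdiff + drift_Q I J adj gam ell mu mm x uc us).
Proof. intros Hk. unfold gen.
  set (P1 := Rpower (1 + Q x) (hm - 1)). set (C := Rabs (hm - 1) * (4 * INR I * W) + 2 * W).
  assert (Hdiff : rsum I (fun i => lm i * D2Vf kappa i i x) <= kappa * hm * P1 * Cdiff).
  { unfold Cdiff, lam_sum. fold C. rewrite <- rsum_scalr, <- rsum_scal. apply rsum_le. intros i Hi.
    pose proof (D2Vf_diag_le kappa x i Hk Hi). fold P1 C in H. specialize (Hlam i Hi).
    replace (kappa * hm * P1 * (lm i * C)) with (lm i * (kappa * hm * P1 * C)) by ring.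
    apply Rmult_le_compat_l; lra. }
  assert (Hdrift : rsum I (fun i => drift I J adj gam ell mu x uc us i * DVf kappa i x)
                   = kappa * hm * P1 * drift_Q I J adj gam ell mu mm x uc us).
  { unfold drift_Q. rewrite <- rsum_scal. apply rsum_ext. intros i Hi. unfold DVf, DVpow.
    change (qform I I (chi_sub I J adj) (weight I J adj mu mm) x) with (Q x).
    change (Dqform I I (chi_sub I J adj) (weight I J adj mu mm) i x) with (DQ i x). fold P1. ring. }
  rewrite Hdrift. lra. Qed.

End Generator.

Section HypothesisA.
Variables (I J : nat) (adj : nat -> nat -> bool) (lm gam ell : nat -> R) (mu : nat -> nat -> R) (m : R) (xi zeta : nat -> R).
Hypothesis HI : (1 <= I)%nat.
Hypothesis HJ : (1 <= J)%nat.
Hypothesis Htree : is_tree I J adj.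
Hypothesis Hlam : forall i, (i < I)%nat -> lm i > 0.
Hypothesis Hmu0 : forall i j, (i < I)%nat -> (j < J)%nat -> adj i j = false -> mu i j = 0.
Hypothesis Hm : m >= 1.
Hypothesis Hxi : forall i, (i < I)%nat -> xi i > 0.
Hypothesis Hzeta : forall j, (j < J)%nat -> zeta j > 0.
Variable mm : R.
Hypothesis Hmm : mm > 0.
Hypothesis Hmpar : forall k, (k < I)%nat -> mm <= mu_up I J adj mu k.
Variables (ucs uss : nat -> R).
Hypothesis Hus : inU I J ucs uss.
Hypothesis Hmin : forall uc us, inU I J uc us ->
  wpow m I xi ucs <= wpow m I xi uc /\ wpow m J zeta uss <= wpow m J zeta us.

Notation rc := (rcost I J m xi zeta).
Notation Q := (Q I J adj mu mm).
Notation c_diss := (cdiss I mm).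
Notation C_rem := (Crem I J adj mu mm).
Notation K_s := (K1 I J adj gam mu).
Notation K_0 := (K2 I ell).
Notation c_Q := (cQ I).
Notation C_Q := (CQ I J adj mu mm).
Notation C_diff := (Cdiff I J adj lm mu m mm).
Notation p := (hm m).
Notation cmin := (cmin I J m xi zeta ucs uss).

Definition delta0 := c_diss / (2 * (C_rem * K_s + 1)).
Definition a_out := c_diss / (4 * C_Q).
Definition B_young := (C_rem * K_0) * (C_rem * K_0) / c_diss.
Definition B_out := C_diff + B_young + a_out.
Definition D_in := C_rem * K_s * INR I / c_Q + C_rem * K_0 * (1 + / c_Q).
Definition D_out := p * B_out * Rpower (2 * B_out / a_out + 1) p.
Definition D_const := p * (C_diff + D_in) * Rpower 2 p.
Definition D_cost := p * (C_diff + D_in) * Rpower (2 * (C_Q / (delta0 * delta0))) p / cmin.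
(* [kappa] makes each of the three constant contributions to [L V] at most 1. *)
Definition kappa := / (1 + D_out + D_const + D_cost).
Definition Ct := kappa * p * (a_out / 2) * Rpower c_Q p.

Lemma c_Q_pos : 0 < c_Q.
Proof. unfold cQ. apply Rinv_0_lt_compat. pose proof (INR_pos I HI). nra. Qed.
Lemma c_diss_pos : 0 < c_diss.
Proof. unfold cdiss. pose proof c_Q_pos. nra. Qed.
Lemma C_rem_nonneg : 0 <= C_rem.
Proof. unfold Crem. pose proof (weight_sum_ge1 I J adj mu HI HJ mm Hmm). pose proof (pos_INR I).
  apply Rmult_le_pos; [apply Rmult_le_pos|]; [|auto|auto]. lra. Qed.
Lemma C_Q_pos : 0 < C_Q.
Proof. unfold CQ. pose proof (weight_sum_ge1 I J adj mu HI HJ mm Hmm). pose proof (INR_pos I HI).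
  apply Rmult_lt_0_compat; [lra|]. apply Rmult_lt_0_compat; [auto|nra]. Qed.
Lemma K_s_nonneg : 0 <= K_s.
Proof. unfold K1, Mp, coupling_sum, Mn, Mg.
  assert (forall n f, 0 <= rsum n (fun k => Rabs (f k))) by (intros; apply rsum_nonneg; intros; apply Rabs_pos).
  pose proof (H I (mu_up I J adj mu)). pose proof (H I (coupling I J adj mu)).
  pose proof (H J (mu_down I J adj mu)). pose proof (H I gam). lra. Qed.
Lemma K_0_nonneg : 0 <= K_0.
Proof. unfold K2, Ml. apply rsum_nonneg; intros; apply Rabs_pos. Qed.
Lemma C_diff_nonneg : 0 <= C_diff.
Proof. unfold Cdiff. pose proof (lam_sum_nonneg I lm Hlam). pose proof (weight_sum_ge1 I J adj mu HI HJ mm Hmm).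
  pose proof (pos_INR I). pose proof (Rabs_pos (hm m - 1)). apply Rmult_le_pos; [auto|].
  assert (0 <= Rabs (hm m - 1) * (4 * INR I * weight_sum I J adj mu mm)) by (apply Rmult_le_pos; nra). lra. Qed.
Lemma delta0_pos : 0 < delta0.
Proof. unfold delta0. pose proof c_diss_pos. pose proof C_rem_nonneg. pose proof K_s_nonneg. apply Rdiv_lt_0_compat; nra. Qed.
Lemma a_out_pos : 0 < a_out.
Proof. unfold a_out. pose proof c_diss_pos. pose proof C_Q_pos. apply Rdiv_lt_0_compat; lra. Qed.
Lemma B_out_nonneg : 0 <= B_out.
Proof. unfold B_out, B_young. pose proof C_diff_nonneg. pose proof a_out_pos. pose proof c_diss_pos.
  assert (0 <= C_rem * K_0 * (C_rem * K_0) / c_diss) by (apply Rle_mult_inv_pos; [apply Rle_0_sqr|auto]). lra. Qed.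
Lemma D_in_nonneg : 0 <= D_in.
Proof. unfold D_in. pose proof c_Q_pos. pose proof C_rem_nonneg. pose proof K_s_nonneg. pose proof K_0_nonneg. pose proof (pos_INR I).
  assert (0 < / c_Q) by (apply Rinv_0_lt_compat; auto).
  apply Rplus_le_le_0_compat; [apply Rle_mult_inv_pos; auto; apply Rmult_le_pos; [apply Rmult_le_pos|]; auto|].
  apply Rmult_le_pos; [apply Rmult_le_pos|]; lra. Qed.

Lemma D_terms_nonneg : 0 <= D_out /\ 0 <= D_const /\ 0 <= D_cost.
Proof. pose proof (hm_pos m Hm). pose proof B_out_nonneg. pose proof C_diff_nonneg. pose proof D_in_nonneg.
  pose proof (cmin_pos I J m xi zeta Hxi Hzeta ucs uss Hus).
  pose proof (Rpower_pos (2 * B_out / a_out + 1) p). pose proof (Rpower_pos 2 p).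
  pose proof (Rpower_pos (2 * (C_Q / (delta0 * delta0))) p).
  unfold D_out, D_const, D_cost. repeat split.
  - repeat apply Rmult_le_pos; lra.
  - repeat apply Rmult_le_pos; lra.
  - apply Rle_mult_inv_pos; auto. repeat apply Rmult_le_pos; lra. Qed.

Lemma kappa_pos : 0 < kappa.
Proof. unfold kappa. destruct D_terms_nonneg as [? [? ?]]. apply Rinv_0_lt_compat. lra. Qed.

Lemma kappa_mul_le1 X : 0 <= X -> X <= 1 + D_out + D_const + D_cost -> kappa * X <= 1.
Proof. intros H0 H1. destruct D_terms_nonneg as [? [? ?]]. unfold kappa.
  apply Rmult_le_reg_l with (1 + D_out + D_const + D_cost); [lra|]. rewrite <- Rmult_assoc, Rinv_r by lra. lra. Qed.

Lemma Ct_pos : 0 < Ct.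
Proof. unfold Ct. pose proof kappa_pos. pose proof (hm_pos m Hm). pose proof a_out_pos. pose proof (Rpower_pos c_Q p).
  apply Rmult_lt_0_compat; [apply Rmult_lt_0_compat; [apply Rmult_lt_0_compat|]|]; lra. Qed.

Notation genk x uc us := (gen I J adj lm gam ell mu (DVf I J adj mu m mm kappa) (D2Vf I J adj mu m mm kappa) x uc us).
Notation drift_Q x uc us := (drift_Q I J adj gam ell mu mm x uc us).

(* Outside [K_delta] the term [|e.x|] is small against [|x|], so the linear remainder is absorbed by the dissipation. *)
Lemma drift_Q_outside x uc us : inU I J uc us -> Rabs (edot I x) <= delta0 * norm I x ->
  drift_Q x uc us <= B_young - a_out * Q x.
Proof. intros HU Hs. pose proof (drift_Q_le I J adj gam ell mu HI HJ Htree Hmu0 mm Hmm Hmpar x uc us HU) as HG. unfold sx in HG.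
  set (nx := norm I x) in *. set (N := sqnorm I x) in *.
  assert (HN : nx * nx = N) by apply norm_mul_self. assert (Hnx : 0 <= nx) by apply norm_nonneg.
  pose proof c_diss_pos. pose proof C_rem_nonneg. pose proof K_s_nonneg. pose proof K_0_nonneg. pose proof C_Q_pos.
  pose proof delta0_pos.
  assert (T1 : C_rem * K_s * Rabs (edot I x) * nx <= c_diss / 2 * N).
  { assert (C_rem * K_s * delta0 <= c_diss / 2).
    { unfold delta0. apply Rmult_le_reg_r with (2 * (C_rem * K_s + 1)); [nra|].
      replace (C_rem * K_s * (c_diss / (2 * (C_rem * K_s + 1))) * (2 * (C_rem * K_s + 1))) with (C_rem * K_s * c_diss) by (field; nra).
      nra. }
    assert (C_rem * K_s * Rabs (edot I x) * nx <= C_rem * K_s * (delta0 * nx) * nx).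
    { apply Rmult_le_compat_r; auto. apply Rmult_le_compat_l; nra. }
    assert (C_rem * K_s * (delta0 * nx) * nx = (C_rem * K_s * delta0) * N) by (rewrite <- HN; ring).
    assert (0 <= N) by (rewrite <- HN; nra). nra. }
  assert (T2 : C_rem * K_0 * nx <= c_diss / 4 * N + B_young).
  { unfold B_young. set (C := C_rem * K_0). assert (0 <= (c_diss * nx / 2 - C) * (c_diss * nx / 2 - C)) by apply Rle_0_sqr.
    apply Rmult_le_reg_l with c_diss; auto.
    replace (c_diss * (c_diss / 4 * N + C * C / c_diss)) with (c_diss * c_diss / 4 * N + C * C) by (field; lra).
    rewrite <- HN. nra. }
  pose proof (Q_upper I J adj mu HI HJ mm Hmm x) as Hqu. fold N in Hqu.
  assert (a_out * Q x <= c_diss / 4 * N).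
  { unfold a_out. apply Rmult_le_reg_l with (4 * C_Q); [lra|].
    replace (4 * C_Q * (c_diss / (4 * C_Q) * Q x)) with (c_diss * Q x) by (field; lra).
    replace (4 * C_Q * (c_diss / 4 * N)) with (c_diss * (C_Q * N)) by field. apply Rmult_le_compat_l; lra. }
  nra. Qed.

Lemma gen_Vf_outside x uc us : inRd I x -> inU I J uc us -> ~ Kdelta I delta0 x ->
  genk x uc us <= 1 - Ct * rpow (norm I x) m.
Proof. intros Hx HU HK.
  assert (Hs : Rabs (edot I x) <= delta0 * norm I x).
  { destruct (Rle_dec (Rabs (edot I x)) (delta0 * norm I x)); auto. exfalso; apply HK; split; auto; lra. }
  pose proof (drift_Q_outside x uc us HU Hs) as HG.
  pose proof (gen_Vf_le I J adj lm gam ell mu m mm HI HJ Hlam Hm Hmm kappa x uc us kappa_pos) as Hgen.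
  set (q := Q x) in *. set (T := 1 + q) in *.
  assert (Hq : 0 <= q) by apply (Q_nonneg I J adj mu mm Hmm).
  assert (HT : 1 <= T) by (unfold T; lra).
  pose proof (hm_pos m Hm) as Hp. pose proof kappa_pos as Hk. pose proof a_out_pos. destruct D_terms_nonneg as [? [? ?]].
  set (P1 := Rpower T (p - 1)) in *. assert (HP1 : 0 < P1) by apply Rpower_pos.
  assert (Hgen2 : genk x uc us <= kappa * p * (B_out * P1 - a_out * Rpower T p)).
  { eapply Rle_trans; [apply Hgen|].
    assert (E : B_out * P1 - a_out * Rpower T p = P1 * (C_diff + B_young - a_out * q)).
    { rewrite <- (Rpower_pred_mul T p) by lra. fold P1. unfold B_out, T. ring. }
    rewrite E. replace (kappa * p * P1 * (C_diff + drift_Q x uc us)) with (kappa * p * (P1 * (C_diff + drift_Q x uc us))) by ring.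
    apply Rmult_le_compat_l; [nra|]. apply Rmult_le_compat_l; lra. }
  pose proof (Rpower_absorb B_out a_out p T B_out_nonneg a_out_pos Hp HT) as Habs. fold P1 in Habs.
  pose proof (Q_lower I J adj mu HI HJ Htree mm Hmm x) as Hql. fold q in Hql.
  pose proof (Rpower_lower q (sqnorm I x) (norm I x) c_Q p c_Q_pos Hp Hq Hql (eq_sym (norm_mul_self I x)) (norm_nonneg I x)) as Hlp.
  rewrite hm_double in Hlp. fold T in Hlp.
  assert (kappa * D_out <= 1) by (apply kappa_mul_le1; lra).
  assert (kappa * p * (a_out / 2) * (Rpower c_Q p * rpow (norm I x) m) <= kappa * p * (a_out / 2) * Rpower T p).
  { apply Rmult_le_compat_l; auto. apply Rmult_le_pos; [nra|lra]. }
  assert (kappa * p * (B_out * P1 - a_out * Rpower T p) <= kappa * p * (B_out * Rpower (2 * B_out / a_out + 1) p - a_out / 2 * Rpower T p)).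
  { apply Rmult_le_compat_l; nra. }
  unfold Ct, D_out in *. nra. Qed.

Lemma drift_Q_le_affine x uc us : inU I J uc us -> drift_Q x uc us <= D_in * (1 + Q x).
Proof. intros HU. pose proof (drift_Q_le I J adj gam ell mu HI HJ Htree Hmu0 mm Hmm Hmpar x uc us HU) as HG. unfold sx in HG.
  set (nx := norm I x) in *. set (N := sqnorm I x) in *.
  assert (HN : nx * nx = N) by apply norm_mul_self. assert (Hnx : 0 <= nx) by apply norm_nonneg.
  assert (HN0 : 0 <= N) by (rewrite <- HN; nra).
  pose proof c_diss_pos. pose proof C_rem_nonneg. pose proof K_s_nonneg. pose proof K_0_nonneg. pose proof c_Q_pos.
  pose proof (Q_lower I J adj mu HI HJ Htree mm Hmm x) as Hql. fold N in Hql.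
  set (T := 1 + Q x). pose proof (Q_nonneg I J adj mu mm Hmm x).
  assert (HT1 : 1 <= T) by (unfold T; lra).
  assert (HNT : N <= T / c_Q).
  { apply Rmult_le_reg_l with c_Q; auto. replace (c_Q * (T / c_Q)) with T by (field; lra). unfold T; lra. }
  pose proof (Rabs_edot_le I x) as He. fold nx in He.
  assert (C_rem * K_s * Rabs (edot I x) * nx <= C_rem * K_s * INR I / c_Q * T).
  { apply Rle_trans with (C_rem * K_s * (INR I * N)).
    - rewrite <- HN. replace (C_rem * K_s * Rabs (edot I x) * nx) with (C_rem * K_s * (Rabs (edot I x) * nx)) by ring.
      apply Rmult_le_compat_l; [nra|]. replace (INR I * (nx * nx)) with ((INR I * nx) * nx) by ring.
      apply Rmult_le_compat_r; auto.
    - replace (C_rem * K_s * INR I / c_Q * T) with (C_rem * K_s * (INR I * (T / c_Q))) by (field; lra).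
      apply Rmult_le_compat_l; [nra|]. apply Rmult_le_compat_l; auto. apply pos_INR. }
  assert (C_rem * K_0 * nx <= C_rem * K_0 * (1 + / c_Q) * T).
  { assert (nx <= 1 + N) by nra.
    assert (1 + N <= (1 + / c_Q) * T) by (replace ((1 + / c_Q) * T) with (T + T / c_Q) by (field; lra); lra).
    replace (C_rem * K_0 * (1 + / c_Q) * T) with (C_rem * K_0 * ((1 + / c_Q) * T)) by ring.
    apply Rmult_le_compat_l; nra. }
  unfold D_in. fold T. nra. Qed.

Lemma one_add_Q_inside x : delta0 * norm I x < Rabs (edot I x) ->
  1 + Q x <= 1 + C_Q / (delta0 * delta0) * (edot I x * edot I x).
Proof. intros HK. set (s := edot I x) in *. set (nx := norm I x) in *.
  pose proof delta0_pos. pose proof C_Q_pos. pose proof (norm_nonneg I x). fold nx in H1.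
  pose proof (Q_upper I J adj mu HI HJ mm Hmm x) as Hqu. rewrite <- norm_mul_self in Hqu. fold nx in Hqu.
  assert (delta0 * delta0 * (nx * nx) <= s * s).
  { assert (Z : (delta0 * nx) * (delta0 * nx) <= Rabs s * Rabs s) by (apply Rmult_le_compat; nra).
    rewrite <- Rabs_mult, Rabs_pos_eq in Z by apply Rle_0_sqr. nra. }
  assert (nx * nx <= s * s / (delta0 * delta0)).
  { apply Rmult_le_reg_l with (delta0 * delta0); [nra|].
    replace (delta0 * delta0 * (s * s / (delta0 * delta0))) with (s * s) by (field; lra). lra. }
  replace (C_Q / (delta0 * delta0) * (s * s)) with (C_Q * (s * s / (delta0 * delta0))) by (field; lra).
  assert (C_Q * (nx * nx) <= C_Q * (s * s / (delta0 * delta0))) by (apply Rmult_le_compat_l; lra). lra. Qed.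

(* Inside [K_delta], [|x|] is controlled by [|e.x|] and hence by the running cost. *)
Lemma gen_Vf_inside x uc us : inU I J uc us -> Kdelta I delta0 x -> genk x uc us <= 1 + rc x uc us.
Proof. intros HU [_ HK].
  pose proof (gen_Vf_le I J adj lm gam ell mu m mm HI HJ Hlam Hm Hmm kappa x uc us kappa_pos) as Hgen.
  pose proof (drift_Q_le_affine x uc us HU) as HGD.
  set (T := 1 + Q x) in *. assert (HT : 1 <= T) by (pose proof (Q_nonneg I J adj mu mm Hmm x); unfold T; lra).
  pose proof (hm_pos m Hm) as Hp. pose proof kappa_pos as Hk. pose proof C_diff_nonneg. pose proof D_in_nonneg.
  destruct D_terms_nonneg as [? [? ?]]. pose proof (cmin_pos I J m xi zeta Hxi Hzeta ucs uss Hus) as Hcr.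
  set (P1 := Rpower T (p - 1)) in *. assert (HP1 : 0 < P1) by apply Rpower_pos.
  assert (Hgen2 : genk x uc us <= kappa * p * (C_diff + D_in) * Rpower T p).
  { eapply Rle_trans; [apply Hgen|]. rewrite <- (Rpower_pred_mul T p) by lra. fold P1.
    replace (kappa * p * P1 * (C_diff + drift_Q x uc us)) with (kappa * p * (P1 * (C_diff + drift_Q x uc us))) by ring.
    replace (kappa * p * (C_diff + D_in) * (P1 * T)) with (kappa * p * (P1 * ((C_diff + D_in) * T))) by ring.
    apply Rmult_le_compat_l; [nra|]. apply Rmult_le_compat_l; nra. }
  assert (HCd : 0 < C_Q / (delta0 * delta0)) by (pose proof delta0_pos; pose proof C_Q_pos; apply Rdiv_lt_0_compat; nra).
  pose proof (Rpower_growth T (C_Q / (delta0 * delta0)) (edot I x) p HCd Hp HT (one_add_Q_inside x HK)) as Hgr.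
  rewrite hm_double in Hgr.
  pose proof (rpow_Rabs_edot_le I J m xi zeta Hm Hxi Hzeta ucs uss Hus Hmin x uc us HU) as Hrp.
  assert (Hrc0 : 0 <= rc x uc us / cmin) by (pose proof (rpow_nonneg m (Rabs (edot I x))); lra).
  set (Z := kappa * p * (C_diff + D_in)) in *.
  assert (HZ : 0 <= Z) by (unfold Z; repeat apply Rmult_le_pos; lra).
  pose proof (Rpower_pos (2 * (C_Q / (delta0 * delta0))) p). set (RC := Rpower (2 * (C_Q / (delta0 * delta0))) p) in *.
  assert (A1 : kappa * D_const <= 1) by (apply kappa_mul_le1; lra).
  assert (A2 : kappa * D_cost <= 1) by (apply kappa_mul_le1; lra).
  assert (Z * RC * rpow (Rabs (edot I x)) m <= Z * RC * (rc x uc us / cmin)) by (apply Rmult_le_compat_l; [apply Rmult_le_pos|]; lra).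
  assert (Z * Rpower T p <= Z * (Rpower 2 p + RC * rpow (Rabs (edot I x)) m)) by (apply Rmult_le_compat_l; auto).
  assert (E1 : kappa * D_const = Z * Rpower 2 p) by (unfold D_const, Z; ring).
  assert (E2 : kappa * D_cost * rc x uc us = Z * RC * (rc x uc us / cmin)) by (unfold D_cost, Z, RC; field; lra).
  assert (Hrc : 0 <= rc x uc us)
    by (replace (rc x uc us) with (cmin * (rc x uc us / cmin)) by (field; lra); apply Rmult_le_pos; lra).
  assert (kappa * D_cost * rc x uc us <= 1 * rc x uc us) by (apply Rmult_le_compat_r; lra).
  assert (Z * (Rpower 2 p + RC * rpow (Rabs (edot I x)) m) = Z * Rpower 2 p + Z * RC * rpow (Rabs (edot I x)) m) by ring.
  lra. Qed.

Definition hfun : cost := fun x _ _ => Ct * rpow (norm I x) m.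

Lemma closure_sublevel_compact lvl : is_compact I (fun x => closure I (Kdelta I delta0) x /\ minU_le I J rc lvl x).
Proof. pose proof delta0_pos as Hdel. pose proof (cmin_pos I J m xi zeta Hxi Hzeta ucs uss Hus) as Hcr. split.
  - exists (Rmax 1 (lvl / cmin) / delta0). intros x Hx [Hcl Hmu].
    apply (minU_rcost_iff I J m xi zeta ucs uss Hus Hmin lvl x) in Hmu. destruct Hmu as [_ HP].
    pose proof (closure_Kdelta I delta0 x Hcl) as Hc. pose proof (rmin_ge I J m xi zeta Hm ucs uss x) as HPg.
    assert (rpow (Rabs (edot I x)) m <= lvl / cmin).
    { apply Rmult_le_reg_l with cmin; auto. replace (cmin * (lvl / cmin)) with lvl by (field; lra). lra. }
    pose proof (le_of_rpow_le m _ _ Hm (Rabs_pos _) H).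
    apply Rmult_le_reg_l with delta0; auto.
    replace (delta0 * (Rmax 1 (lvl / cmin) / delta0)) with (Rmax 1 (lvl / cmin)) by (field; lra). lra.
  - intros xs y Hxs Hy Hc. split.
    + apply (closure_converges I (Kdelta I delta0) xs y); auto. intros n; destruct (Hxs n) as [A [B _]]; auto.
    + apply (minU_rcost_iff I J m xi zeta ucs uss Hus Hmin lvl y). split; auto.
      apply (converges_le I (rmin I J m xi zeta ucs uss) lvl xs y (continuous_rmin I J m xi zeta Hm ucs uss)); auto.
      intros n. destruct (Hxs n) as [A [_ B]]. apply (minU_rcost_iff I J m xi zeta ucs uss Hus Hmin lvl (xs n)) in B. tauto. Qed.

Lemma h_sublevel_compact lvl : is_compact I (minU_le I J hfun lvl).
Proof. pose proof Ct_pos as HCt. split.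
  - exists (Rmax 1 (lvl / Ct)). intros x Hx [_ [uc [us [HU Hh]]]]. unfold hfun in Hh.
    apply (le_of_rpow_le m); auto; [apply norm_nonneg|].
    apply Rmult_le_reg_l with Ct; auto. replace (Ct * (lvl / Ct)) with lvl by (field; lra). lra.
  - intros xs y Hxs Hy Hc. split; auto. exists unit0, unit0. split; [apply inU_unit0; auto|]. unfold hfun.
    apply (converges_le I (fun z => Ct * rpow (norm I z) m) lvl xs y); auto.
    + apply cont_scal, continuous_rpow_norm; auto.
    + intros n. destruct (Hxs n) as [A [_ [uc [us [_ B]]]]]. split; auto. Qed.

Lemma h_continuous : continuous_RdU I J hfun.
Proof. intros x uc us Hx HU eps He. unfold hfun.
  assert (Hc : continuous_on_Rd I (fun z => Ct * rpow (norm I z) m)) by (apply cont_scal, continuous_rpow_norm; auto).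
  destruct (Hc x Hx eps He) as [eta [Heta H]]. exists eta. split; auto.
  intros y vc vs Hy HV Hn. apply H; auto.
  assert (0 <= rsum I (fun i => Rabs (vc i - uc i))) by (apply rsum_nonneg; intros; apply Rabs_pos).
  assert (0 <= rsum J (fun j => Rabs (vs j - us j))) by (apply rsum_nonneg; intros; apply Rabs_pos). lra. Qed.

Lemma Vf_sublevel_compact lvl : is_compact I (fun x => inRd I x /\ Vf I J adj mu m mm kappa x <= lvl).
Proof. pose proof kappa_pos as Hk. pose proof (Rpower_pos c_Q p). split.
  - exists (Rmax 1 (lvl / (kappa * Rpower c_Q p))). intros x Hx [_ HV].
    unfold Vf, Vpow in HV. change (qform I I (chi_sub I J adj) (weight I J adj mu mm) x) with (Q x) in HV.
    pose proof (Rpower_lower (Q x) (sqnorm I x) (norm I x) c_Q p c_Q_pos (hm_pos m Hm)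
        (Q_nonneg I J adj mu mm Hmm x) (Q_lower I J adj mu HI HJ Htree mm Hmm x) (eq_sym (norm_mul_self I x)) (norm_nonneg I x)) as Hlp.
    rewrite hm_double in Hlp.
    apply (le_of_rpow_le m); auto; [apply norm_nonneg|].
    assert (0 < kappa * Rpower c_Q p) by (apply Rmult_lt_0_compat; auto).
    apply Rmult_le_reg_l with (kappa * Rpower c_Q p); auto.
    replace (kappa * Rpower c_Q p * (lvl / (kappa * Rpower c_Q p))) with lvl by (field; lra).
    assert (kappa * (Rpower c_Q p * rpow (norm I x) m) <= kappa * Rpower (1 + Q x) p) by (apply Rmult_le_compat_l; lra).
    nra.
  - intros xs y Hxs Hy Hc. split; auto.
    apply (converges_le I (Vf I J adj mu m mm kappa) lvl xs y); auto.
    + apply (Vpow_C2 I I (chi_sub I J adj) (weight I J adj mu mm) (hm m) kappa).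
      intros; pose proof (weight_ge1 I J adj mu mm Hmm v); lra.
    + intros n; destruct (Hxs n) as [A [_ B]]; auto. Qed.

Lemma hypothesisA_holds : HypothesisA I J adj lm gam ell mu rc (Kdelta I delta0) hfun.
Proof.
  split; [apply Kdelta_open|]. split; [apply closure_sublevel_compact|].
  split; [intros x uc us _ _; unfold hfun; pose proof Ct_pos; pose proof (rpow_nonneg m (norm I x)); nra|].
  split; [apply h_continuous|]. split; [apply h_sublevel_compact|].
  exists (Vf I J adj mu m mm kappa), (DVf I J adj mu m mm kappa), (D2Vf I J adj mu m mm kappa).
  split; [|split; [|split; [|split]]].
  - apply Vpow_C2. intros; pose proof (weight_ge1 I J adj mu mm Hmm v); lra.
  - intros x _. unfold Vf, Vpow. left. apply Rmult_lt_0_compat; [apply kappa_pos|apply Rpower_pos].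
  - apply Vf_sublevel_compact.
  - intros x uc us Hx HU HK. apply gen_Vf_outside; auto.
  - intros x uc us Hx HU HK. apply gen_Vf_inside; auto. Qed.

End HypothesisA.

Lemma hypothesisA_exists (I J : nat) (adj : nat -> nat -> bool) (lm gam ell : nat -> R) (mu : nat -> nat -> R)
    (m : R) (xi zeta : nat -> R) (mm : R) :
  (1 <= I)%nat -> (1 <= J)%nat -> is_tree I J adj -> (forall i, (i < I)%nat -> lm i > 0) ->
  (forall i j, (i < I)%nat -> (j < J)%nat -> adj i j = false -> mu i j = 0) -> m >= 1 ->
  (forall i, (i < I)%nat -> xi i > 0) -> (forall j, (j < J)%nat -> zeta j > 0) ->
  mm > 0 -> (forall k, (k < I)%nat -> mm <= mu_up I J adj mu k) ->
  exists delta Ct0, delta > 0 /\ Ct0 > 0 /\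
    HypothesisA I J adj lm gam ell mu (rcost I J m xi zeta) (Kdelta I delta) (fun x _ _ => Ct0 * rpow (norm I x) m).
Proof. intros HI HJ Htree Hlam Hmu0 Hm Hxi Hzeta Hmm Hmpar.
  destruct (ex_cost_minimizer I J m xi zeta HI HJ Hm Hxi Hzeta) as [ucs [uss [Hus Hmin]]].
  exists (delta0 I J adj gam mu mm), (Ct I J adj lm gam ell mu m xi zeta mm ucs uss).
  split; [apply delta0_pos; auto|]. split; [apply Ct_pos; auto|].
  apply hypothesisA_holds; auto. Qed.

Lemma mu_up_pos I J adj mu : (1 <= J)%nat -> is_tree I J adj ->
  (forall i j, (i < I)%nat -> (j < J)%nat -> adj i j = true -> mu i j > 0) ->
  forall k, (k < I)%nat -> 0 < mu_up I J adj mu k.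
Proof. intros HJ Ht Hmu k Hk. destruct (parent_customer I J adj HJ Ht k Hk) as [j0 [Hp [Hj0 Ha]]].
  unfold mu_up. rewrite (rsum_single J _ j0 Hj0). rewrite chi_true by auto. specialize (Hmu k j0 Hk Hj0 Ha). lra.
  intros j Hj Hne. rewrite chi_false. ring. congruence. Qed.

Theorem mainTheorem6 (I J : nat) (adj : nat -> nat -> bool)
    (lam gam ell : nat -> R) (mu : nat -> nat -> R) (m : R) (xi zeta : nat -> R) :
  (1 <= I)%nat -> (1 <= J)%nat ->
  is_tree I J adj ->
  (forall i, (i < I)%nat -> lam i > 0) ->
  (forall i, (i < I)%nat -> gam i >= 0) ->
  (forall i j, (i < I)%nat -> (j < J)%nat -> adj i j = true -> mu i j > 0) ->
  (forall i j, (i < I)%nat -> (j < J)%nat -> adj i j = false -> mu i j = 0) ->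
  m >= 1 ->
  (forall i, (i < I)%nat -> xi i > 0) ->
  (forall j, (j < J)%nat -> zeta j > 0) ->
  exists delta Ct, delta > 0 /\ Ct > 0 /\
    HypothesisA I J adj lam gam ell mu (rcost I J m xi zeta) (Kdelta I delta)
      (fun x _ _ => Ct * rpow (norm I x) m).
Proof.
  intros HI HJ Htree Hlam _ Hmu Hmu0 Hm Hxi Hzeta.
  destruct (ex_argmin I (mu_up I J adj mu) HI) as [i0 [Hi0 Hmin]].
  apply (hypothesisA_exists I J adj lam gam ell mu m xi zeta (mu_up I J adj mu i0)); auto.
  apply (mu_up_pos I J adj mu HJ Htree Hmu i0 Hi0). Qed.
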